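(* Let $\Sigma$ be a finite set of tgds and egds over a schema $\mathbf R$, let $I$ be an instance, and let $\star\in\{\mathsf{std},\mathsf{obl},\mathsf{sobl},\mathsf{core}\}$. Let $\Sigma^{tgd}$ be the set of tgds obtained as follows, using a new binary relation symbol $E\notin\mathbf R$: (1) every tgd of $\Sigma$ is in $\Sigma^{tgd}$; (2) for each egd $\alpha\rightarrow x=y$ in $\Sigma$, the tgd $\alpha\rightarrow E(x,y),E(y,x)$ is in $\Sigma^{tgd}$; (3) for each relation symbol $R$ used in $\Sigma$ and each $1\le i\le\mathrm{arity}(R)$, the tgd $E(x,y),R(x_1,\dots,x_{i-1},x,x_{i+1},\dots,x_{\mathrm{arity}(R)})\rightarrow R(x_1,\dots,x_{i-1},y,x_{i+1},\dots,x_{\mathrm{arity}(R)})$ is in $\Sigma^{tgd}$. If the $\star$-chase on $I$ with $\Sigma^{tgd}$ terminates, then so does the $\star$-chase on $I$ with $\Sigma$.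
   Context: Instances are finite sets of atoms over constants ($\mathsf{Cons}$) and nulls ($\mathsf{Nulls}$). A tgd is $\forall\bar x\forall\bar y\,(\alpha(\bar x,\bar y)\rightarrow\exists\bar z\,\beta(\bar x,\bar z))$; an egd is $\forall\bar x\,(\alpha(\bar x)\rightarrow x=y)$ with $x,y$ in $\bar x$; $\alpha,\beta$ are conjunctions of atoms. A trigger is $(\xi,h)$ with $h$ a mapping on body variables (identity on constants) and $h(\alpha)\subseteq I$. For a tgd it is active if no extension $h'$ has $h'(\beta)\subseteq I$; firing it adds $h'(\beta)$ where $h'$ extends $h$ with fresh nulls for existential variables. For an egd it is active if $h(x)\ne h(y)$; firing it replaces, if both are nulls, all occurrences of the later null by the earlier one (in a fixed enumeration); if one is a null and the other a constant, all occurrences of the null by the constant; if both are constants, the chase fails. Chase variants: standard chase fires (nondeterministically) active triggers; oblivious chase fires any trigger but each trigger at most once; semi-oblivious chase fires any trigger but for each tgd at most one trigger among those whose mappings agree on the variables $\bar x$ shared by body and head; core chase applies active egd triggers, otherwise fires all active tgd triggers in parallel and replaces the union of the results by its core. A chase terminates when it reaches an instance where the respective variant admits no further step. *)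

From HB Require Import structures.
From mathcomp Require Import all_boot.
From mathcomp Require Import finmap.
From Stdlib Require List.

Set Implicit Arguments.
Unset Strict Implicit.
Unset Printing Implicit Defensive.

Local Open Scope fset_scope.

(** Values: constants (Cons) and labelled nulls (Nulls), both indexed by nat.
    The fixed enumeration of nulls is the order on their nat index. *)
Inductive val := Cst of nat | Null of nat.

Definition sum_of_val (v : val) : nat + nat :=
  match v with Cst c => inl c | Null k => inr k end.
Definition val_of_sum (s : nat + nat) : val :=
  match s with inl c => Cst c | inr k => Null k end.
Lemma sum_of_valK : cancel sum_of_val val_of_sum. Proof. by case. Qed.
HB.instance Definition _ := Countable.copy val (can_type sum_of_valK).

Definition atom := (nat * seq val)%type.
Definition instance := {fset atom}.

Inductive term := Var of nat | Const of nat.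
Definition ratom := (nat * seq term)%type.

(** Dependencies: tgd  body -> exists (head vars not in body) head,
                  egd  body -> x = y. *)
Inductive dep :=
  | Tgd (body head : seq ratom)
  | Egd (body : seq ratom) (x y : nat).

Definition body_of (d : dep) : seq ratom :=
  match d with Tgd b _ => b | Egd b _ _ => b end.
Definition is_tgd (d : dep) : bool := if d is Tgd _ _ then true else false.
Definition is_egd (d : dep) : bool := if d is Egd _ _ _ then true else false.

Definition tvars (t : term) : seq nat :=
  match t with Var x => [:: x] | Const _ => [::] end.
Definition vars (s : seq ratom) : seq nat :=
  undup (flatten [seq flatten (map tvars a.2) | a <- s]).
Definition frontier (b hd : seq ratom) : seq nat :=
  [seq x <- vars b | x \in vars hd].
Definition exvars (b hd : seq ratom) : seq nat :=
  [seq z <- vars hd | z \notin vars b].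

Definition sub (h : nat -> val) (t : term) : val :=
  match t with Var x => h x | Const c => Cst c end.
Definition inst_atom (h : nat -> val) (a : ratom) : atom := (a.1, map (sub h) a.2).
Definition inst_set (h : nat -> val) (s : seq ratom) : instance :=
  [fset a | a in map (inst_atom h) s].

Definition trig (I : instance) (d : dep) (h : nat -> val) : Prop :=
  forall a, List.In a (body_of d) -> inst_atom h a \in I.

Definition active (I : instance) (d : dep) (h : nat -> val) : Prop :=
  match d with
  | Tgd b hd => ~ exists h' : nat -> val,
                  (forall x, x \in vars b -> h' x = h x) /\
                  (forall a, List.In a hd -> inst_atom h' a \in I)
  | Egd _ x y => h x <> h y
  end.

(** Chase states: an instance, a counter (all nulls >= the counter are
    fresh), and the list of already fired trigger keys; or failure. *)
Definition key := (dep * seq val)%type.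
Inductive state := St (I : instance) (n : nat) (F : seq key) | Fail.

Definition fresh_on (h' : nat -> val) (zs : seq nat) (n n' : nat) : Prop :=
  n <= n' /\
  (forall z, z \in zs -> exists k, h' z = Null k /\ n <= k < n') /\
  (forall z1 z2, z1 \in zs -> z2 \in zs -> h' z1 = h' z2 -> z1 = z2).

Definition tgd_fire (I : instance) (n : nat) (b hd : seq ratom) (h : nat -> val)
  (I' : instance) (n' : nat) : Prop :=
  exists h' : nat -> val,
    (forall x, x \in vars b -> h' x = h x) /\
    fresh_on h' (exvars b hd) n n' /\
    I' = I `|` inst_set h' hd.

Definition rename (f : val -> val) (I : instance) : instance :=
  [fset (a.1, map f a.2) | a in I].
Definition replace (u w : val) (v : val) : val := if v == u then w else v.

Definition egd_result (I : instance) (n : nat) (F : seq key) (u v : val) : state :=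
  if u == v then St I n F else
  match u, v with
  | Null a, Null b =>
      if a < b then St (rename (replace (Null b) (Null a)) I) n F
      else St (rename (replace (Null a) (Null b)) I) n F
  | Null a, Cst c => St (rename (replace (Null a) (Cst c)) I) n F
  | Cst c, Null a => St (rename (replace (Null a) (Cst c)) I) n F
  | Cst _, Cst _ => Fail
  end.

(** Firing a trigger (d,h) in state (I, n); F is the fired-key list of the
    resulting state. *)
Definition fire (I : instance) (n : nat) (F : seq key) (d : dep) (h : nat -> val)
  (s' : state) : Prop :=
  match d with
  | Tgd b hd => exists I' n', tgd_fire I n b hd h I' n' /\ s' = St I' n' F
  | Egd _ x y => s' = egd_result I n F (h x) (h y)
  end.

Definition obl_key (d : dep) (h : nat -> val) : key := (d, map h (vars (body_of d))).
Definition sobl_key (d : dep) (h : nat -> val) : key :=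
  match d with
  | Tgd b hd => (d, map h (frontier b hd))
  | Egd b _ _ => (d, map h (vars b))
  end.

Definition std_step (S : seq dep) (s s' : state) : Prop :=
  exists I n F d h, s = St I n F /\ List.In d S /\ trig I d h /\ active I d h /\
    fire I n F d h s'.

Definition obl_step (S : seq dep) (s s' : state) : Prop :=
  exists I n F d h, s = St I n F /\ List.In d S /\ trig I d h /\
    ~ List.In (obl_key d h) F /\ fire I n (obl_key d h :: F) d h s'.

Definition sobl_step (S : seq dep) (s s' : state) : Prop :=
  exists I n F d h, s = St I n F /\ List.In d S /\ trig I d h /\
    ~ List.In (sobl_key d h) F /\ fire I n (sobl_key d h :: F) d h s'.

Definition hom (g : val -> val) (A B : instance) : Prop :=
  (forall c, g (Cst c) = Cst c) /\
  (forall a, a \in A -> (a.1, map g a.2) \in B).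

Definition is_core_of (C K : instance) : Prop :=
  C `<=` K /\ (exists g, hom g K C) /\
  (forall C', C' `<` C -> ~ exists g, hom g C C').

Definition head_of (d : dep) : seq ratom :=
  match d with Tgd _ hd => hd | Egd _ _ _ => [::] end.
Definition exvars_of (d : dep) : seq nat := exvars (body_of d) (head_of d).

(** Core chase step: apply an active egd trigger if there is one; otherwise
    fire all active tgd triggers in parallel (each with its own fresh nulls)
    and replace the result by a core of it. A parallel firing is a list ts of
    triples (d, h, h'), one per active tgd trigger. *)
Definition core_step (S : seq dep) (s s' : state) : Prop :=
  exists I n F, s = St I n F /\
  ( (exists d h, List.In d S /\ is_egd d /\ trig I d h /\ active I d h /\
        fire I n F d h s')
    \/
    ((~ exists d h, List.In d S /\ is_egd d /\ trig I d h /\ active I d h) /\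
     exists (ts : seq (dep * (nat -> val) * (nat -> val))) (n' : nat) (K : instance),
       ts <> [::] /\ n <= n' /\
       (forall t, List.In t ts ->
          List.In t.1.1 S /\ is_tgd t.1.1 /\ trig I t.1.1 t.1.2 /\
          active I t.1.1 t.1.2 /\
          (forall x, x \in vars (body_of t.1.1) -> t.2 x = t.1.2 x) /\
          (forall z, z \in exvars_of t.1.1 ->
             exists k, t.2 z = Null k /\ n <= k < n')) /\
       (forall t1 t2 z1 z2, List.In t1 ts -> List.In t2 ts ->
          z1 \in exvars_of t1.1.1 -> z2 \in exvars_of t2.1.1 ->
          t1.2 z1 = t2.2 z2 -> t1 = t2 /\ z1 = z2) /\
       List.NoDup [seq obl_key t.1.1 t.1.2 | t <- ts] /\
       (forall d h, List.In d S -> is_tgd d -> trig I d h -> active I d h ->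
          exists t, List.In t ts /\ obl_key t.1.1 t.1.2 = obl_key d h) /\
       is_core_of K (foldr (fun t acc => inst_set t.2 (head_of t.1.1) `|` acc) I ts) /\
       s' = St K n' F)).

Inductive variant := Std | Obl | Sobl | Core.

Definition chase_step (v : variant) (S : seq dep) : state -> state -> Prop :=
  match v with
  | Std => std_step S
  | Obl => obl_step S
  | Sobl => sobl_step S
  | Core => core_step S
  end.

Definition null_bound (I : instance) : nat :=
  \max_(a <- enum_fset I) \max_(v <- a.2) (if v is Null k then k.+1 else 0).

Definition init (I : instance) : state := St I (null_bound I) [::].

Definition terminates (v : variant) (S : seq dep) (I : instance) : Prop :=
  ~ exists f : nat -> state, f 0 = init I /\ forall k, chase_step v S (f k) (f k.+1).

Definition ratom_wf (sch : seq nat) (ar : nat -> nat) (a : ratom) : Prop :=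
  a.1 \in sch /\ size a.2 = ar a.1.
Definition dep_wf (sch : seq nat) (ar : nat -> nat) (d : dep) : Prop :=
  match d with
  | Tgd b hd => (forall a, List.In a b -> ratom_wf sch ar a) /\
                (forall a, List.In a hd -> ratom_wf sch ar a)
  | Egd b x y => (forall a, List.In a b -> ratom_wf sch ar a) /\
                 x \in vars b /\ y \in vars b
  end.
Definition inst_wf (sch : seq nat) (ar : nat -> nat) (I : instance) : Prop :=
  forall a, a \in I -> a.1 \in sch /\ size a.2 = ar a.1.

(** The translation Sigma^tgd, with E the new binary symbol. Variables:
    x = 0, y = 1, x_j = j+2 (positions 0-based). *)
Definition Eatom (E x y : nat) : ratom := (E, [:: Var x; Var y]).
Definition egd_to_tgd (E : nat) (d : dep) : seq dep :=
  match d with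
  | Tgd _ _ => [::]
  | Egd b x y => [:: Tgd b [:: Eatom E x y; Eatom E y x]]
  end.
Definition cong_args (k i z : nat) : seq term :=
  [seq (if j == i then Var z else Var j.+2) | j <- iota 0 k].
Definition cong_tgd (E R k i : nat) : dep :=
  Tgd [:: Eatom E 0 1; (R, cong_args k i 0)] [:: (R, cong_args k i 1)].
Definition syms_dep (d : dep) : seq nat :=
  map fst (body_of d) ++ map fst (head_of d).
Definition used_syms (S : seq dep) : seq nat := undup (flatten (map syms_dep S)).
Definition sigma_tgd (E : nat) (ar : nat -> nat) (S : seq dep) : seq dep :=
  [seq d <- S | is_tgd d] ++
  flatten (map (egd_to_tgd E) S) ++
  flatten [seq [seq cong_tgd E R (ar R) i | i <- iota 0 (ar R)] | R <- used_syms S].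

(* Chase sequences with S are simulated by chase sequences with T := sigma_tgd E ar S.

   For the standard, oblivious and semi-oblivious chase, a state J of the chase
   with S is related to a state I' of the chase with T by a map rho that collapses
   the values related by E and sends the other atoms of I' into J.  A tgd step is
   copied.  An egd step merging u into w is simulated by the translated egd, which
   adds E(u, w) and E(w, u), followed by congruence tgds, which copy every atom
   with u replaced by w.  Egd steps without effect, possible only in the
   (semi-)oblivious chase, consume one of finitely many keys.  Hence an infinite
   chase with S yields an infinite chase with T.

   For the core chase, suppose the chase with T terminates in J.  Then J is a
   model of T, and its quotient Q by the equivalence generated by the egds is a
   model of S into which every stage of the chase with S maps.  Conversely J maps,
   collapsing E, into the stages of the chase with S.  Right after a parallel tgd
   step a stage K is a core; mapping K to Q and back gives an automorphism of K,
   so K is a retract of Q and satisfies S, and no further step is possible. *)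

From Pilot Require Import Defs.
From HB Require Import structures.
From mathcomp Require Import all_boot.
From mathcomp Require Import finmap.
From Stdlib Require List.
From Stdlib Require Import ClassicalEpsilon Classical.
From Stdlib Require Import FunctionalExtensionality PropExtensionality.
From Stdlib Require Import Relation_Operators.
(* Re-import so that [val] denotes the values of Defs, not the subtype projection. *)
Import Defs.

Set Implicit Arguments.
Unset Strict Implicit.
Unset Printing Implicit Defensive.

Local Open Scope fset_scope.

Definition sum_of_term (t : term) : nat + nat :=
  match t with Var x => inl x | Const c => inr c end.
Definition term_of_sum (s : nat + nat) : term :=
  match s with inl x => Var x | inr c => Const c end.
Lemma sum_of_termK : cancel sum_of_term term_of_sum. Proof. by case. Qed.
HB.instance Definition _ := Countable.copy term (can_type sum_of_termK).

Definition sum_of_dep (d : dep) :=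
  match d with Tgd b h => inl (b, h) | Egd b x y => inr (b, x, y) end.
Definition dep_of_sum (s : (seq ratom * seq ratom) + (seq ratom * nat * nat)) :=
  match s with inl (b, h) => Tgd b h | inr (b, x, y) => Egd b x y end.
Lemma sum_of_depK : cancel sum_of_dep dep_of_sum. Proof. by case. Qed.
HB.instance Definition _ := Countable.copy dep (can_type sum_of_depK).

Lemma InP (T : eqType) (x : T) (s : seq T) : List.In x s <-> x \in s.
Proof.
elim: s => [|y s IH] //=; rewrite inE; split.
- by case=> [->|/IH ->]; rewrite ?eqxx ?orbT.
- by case/orP=> [/eqP ->|/IH]; [left|right].
Qed.

Lemma In_mkseq (T : Type) (f : nat -> T) n t :
  List.In t (mkseq f n) <-> exists2 i, i < n & t = f i.
Proof.
rewrite /mkseq List.in_map_iff; split.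
- by case=> i [<- /InP]; rewrite mem_iota add0n => /andP [_ Hi]; exists i.
- by case=> i Hi ->; exists i; split => //; apply/InP; rewrite mem_iota.
Qed.

Lemma uniq_NoDup (T : eqType) (s : seq T) : uniq s -> List.NoDup s.
Proof.
elim: s => [|x s IH] /=; first by constructor.
by case/andP=> Hx Hs; constructor; [move/InP; apply/negP|exact: IH].
Qed.

Lemma filter_nil (T : Type) (p : pred T) s :
  (forall x, List.In x s -> ~~ p x) -> filter p s = [::].
Proof.
elim: s => [|y s IH] //= H; rewrite (negbTE (H y (or_introl erefl))) IH // => x Hx.
by apply: H; right.
Qed.

Lemma uniq_map_inj (T1 T2 : eqType) (f : T1 -> T2) s :
  uniq (map f s) -> {in s &, injective f}.
Proof.
elim: s => [|z s IH] //= /andP [Hz Hu] x y; rewrite !inE.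
case/orP=> [/eqP ->|Hx] /orP [/eqP ->|Hy] // Hf.
- by move: Hz; rewrite Hf map_f.
- by move: Hz; rewrite -Hf map_f.
- exact: IH.
Qed.

Lemma size_undup_map_lt (T : eqType) (f : T -> T) s u w :
  u <> w -> u \in s -> w \in s -> f u = f w -> size (undup (map f s)) < size (undup s).
Proof.
move=> Huw Hu Hw Hf.
apply: (@leq_ltn_trans (size (undup (map f (undup s))))).
  apply: uniq_leq_size; first exact: undup_uniq.
  by move=> x; rewrite !mem_undup => /mapP [y Hy ->]; rewrite map_f ?mem_undup.
rewrite -(size_map f (undup s)) ltn_size_undup; apply/negP => Hun.
by apply: Huw; apply: (uniq_map_inj Hun); rewrite ?mem_undup.
Qed.

Lemma count_lt_sub (T : eqType) (p q : pred T) s x :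
  subpred p q -> x \in s -> q x -> ~~ p x -> count p s < count q s.
Proof.
move=> Hpq; elim: s => [|y s IH] //=; rewrite inE => /orP [/eqP <-|Hx] Hq Hp.
- by rewrite (negbTE Hp) Hq add0n add1n ltnS sub_count.
- have := IH Hx Hq Hp; case Hpy: (p y); first by rewrite (Hpq y Hpy).
  by move=> H; apply: (leq_trans H); rewrite leq_addl.
Qed.

Lemma mixed_radix_lt B N i j : i < N -> j < B -> (i * B + j < N * B)%N.
Proof.
move=> Hi Hj; apply: (@leq_trans (i.+1 * B)); first by rewrite mulSn addnC ltn_add2r.
by rewrite leq_mul2r Hi orbT.
Qed.

Lemma mixed_radix_inj B i1 i2 j1 j2 : j1 < B -> j2 < B ->
  (i1 * B + j1 = i2 * B + j2)%N -> i1 = i2 /\ j1 = j2.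
Proof.
move=> H1 H2 He; have HB : 0 < B by apply: leq_ltn_trans H1.
have Ei : i1 = i2.
  by move: (congr1 (divn^~ B) He); rewrite !divnMDl // !divn_small // !addn0.
by subst i2; split => //; apply/eqP; rewrite -(eqn_add2l (i1 * B)) He.
Qed.

Fixpoint seqs_over (T : Type) (V : seq T) m : seq (seq T) :=
  if m is m'.+1 then [seq x :: l | x <- V, l <- seqs_over V m'] else [:: [::]].

Lemma mem_seqs_over (T : eqType) (V vs : seq T) :
  all (mem V) vs -> vs \in seqs_over V (size vs).
Proof.
elim: vs => [|x vs IH] //= /andP [Hx Hvs].
by apply: (allpairs_f (fun x l => x :: l)) => //; apply: IH.
Qed.

Lemma set_nth_mkseq (T : Type) (x0 w : T) s i : i < size s ->
  set_nth x0 s i w = mkseq (fun j => if j == i then w else nth x0 s j) (size s).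
Proof.
move=> Hi; apply: (@eq_from_nth _ x0).
  by rewrite size_set_nth size_mkseq; apply/maxn_idPr.
move=> j; rewrite size_set_nth (maxn_idPr Hi) => Hj.
by rewrite nth_set_nth nth_mkseq //=; case: eqP.
Qed.

Lemma set_nth_nth (T : Type) (x0 : T) s i : i < size s -> set_nth x0 s i (nth x0 s i) = s.
Proof.
move=> Hi; rewrite set_nth_mkseq // -[RHS](mkseq_nth x0 s); apply/eq_in_map => j _ /=.
by case: eqP => // ->.
Qed.

Lemma map_set_nth_same (T1 T2 : Type) (f : T1 -> T2) x0 (s : seq T1) i w :
  i < size s -> f w = f (nth x0 s i) -> map f (set_nth x0 s i w) = map f s.
Proof.
move=> Hi Hf; rewrite set_nth_mkseq //.
rewrite -[in RHS](mkseq_nth x0 s) /mkseq -!map_comp; apply/eq_in_map => j Hj /=.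
by case: eqP => // ->.
Qed.

Lemma mem_set_nth_or (T : eqType) (x0 w x : T) s i : i < size s ->
  x \in set_nth x0 s i w -> x \in s \/ x = w.
Proof.
move=> Hi; rewrite set_nthE Hi mem_cat inE.
by case/orP=> [/mem_take|/orP [/eqP ->|/mem_drop]]; auto.
Qed.

Lemma list_choice (A B : Type) (b0 : B) (l : seq A) (P : A -> B -> Prop) :
  (forall t, List.In t l -> exists y, P t y) ->
  exists f : A -> B, forall t, List.In t l -> P t (f t).
Proof.
move=> Hex.
have Hex' t : exists y, List.In t l -> P t y.
  by case: (classic (List.In t l)) => [/Hex [y Hy]|Ht]; [exists y|exists b0].
exists (fun t => proj1_sig (constructive_indefinite_description _ (Hex' t))).
by move=> t; exact: (proj2_sig (constructive_indefinite_description _ (Hex' t))).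
Qed.

Section Runs.
Variables (A : Type) (R : A -> A -> Prop).

Inductive star (x : A) : A -> Prop :=
  | star_refl : star x x
  | star_step y z : star x y -> R y z -> star x z.

Definition plus x z := exists2 y, R x y & star y z.

Lemma star_trans x y z : star x y -> star y z -> star x z.
Proof. by move=> Hxy; elim=> // u w _ IH Ruw; exact: star_step IH Ruw. Qed.

Lemma star_plus x y : star x y -> x = y \/ plus x y.
Proof.
elim=> [|u w _ [<-|[m Rxm Hm]] Ruw]; first by left.
- by right; exists w => //; exact: star_refl.
- by right; exists m => //; exact: star_step Hm Ruw.
Qed.

Lemma infinite_run (P : A -> Prop) s0 :
  P s0 -> (forall s, P s -> exists2 s', P s' & plus s s') ->
  exists f : nat -> A, f 0 = s0 /\ forall k, R (f k) (f k.+1).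
Proof.
move=> H0 HP.
pose Q s := exists2 s', P s' & plus s s'.
have HQ s : Q s -> exists s2, R s s2 /\ Q s2.
  case=> s' Ps' [y Rsy Hy]; exists y; split => //.
  by case: (star_plus Hy) => [->|Hp]; [exact: HP|exists s'].
have nx (s : {s | Q s}) : {s2 : {s | Q s} | R (proj1_sig s) (proj1_sig s2)}.
  case: s => s Hs; apply: constructive_indefinite_description.
  by case: (HQ s Hs) => s2 [R2 Q2]; exists (exist _ s2 Q2).
pose g s := proj1_sig (nx s).
exists (fun k => proj1_sig (iter k g (exist _ s0 (HP s0 H0)))); split => // k.
by rewrite iterS; exact: (proj2_sig (nx _)).
Qed.

End Runs.

Definition fixes_consts (f : val -> val) := forall c, f (Cst c) = Cst c.

Definition nulls_below (I : instance) n := forall a, a \in I -> forall k, Null k \in a.2 -> k < n.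

Definition vals (I : instance) : seq val := flatten [seq a.2 | a <- enum_fset I].

Lemma valsP I x : x \in vals I <-> exists2 a, a \in I & x \in a.2.
Proof.
split; last by case=> a Ha Hx; apply/flattenP; exists a.2 => //; apply: map_f.
by case/flattenP=> l /mapP [a Ha ->] Hx; exists a.
Qed.

Lemma mem_inst_set h s x : (x \in inst_set h s) = (x \in map (inst_atom h) s).
Proof.
apply/idP/idP => [/imfsetP [y /= Hy ->] //|Hx].
by apply/imfsetP; exists x.
Qed.

Lemma inst_setP h s x : x \in inst_set h s <-> exists a, List.In a s /\ x = inst_atom h a.
Proof.
rewrite mem_inst_set; split.
- by case/mapP=> a /InP ? ->; exists a.
- by case=> a [/InP ? ->]; apply: map_f.
Qed.

Lemma mem_rename f I a : a \in I -> (a.1, map f a.2) \in rename f I.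
Proof. by move=> Ha; apply/imfsetP; exists a. Qed.

Lemma renameP f I x : x \in rename f I -> exists2 a, a \in I & x = (a.1, map f a.2).
Proof. by case/imfsetP=> a /= Ha ->; exists a. Qed.

Lemma mem_flatten_tvars x (l : seq term) : (x \in flatten (map tvars l)) = (Var x \in l).
Proof. by elim: l => [|[y|c] l IH] //=; rewrite ?inE -?IH. Qed.

Lemma varsP x s : x \in vars s <-> exists a, List.In a s /\ Var x \in a.2.
Proof.
rewrite /vars mem_undup; split.
- by case/flattenP=> l /mapP [a /InP Ha ->]; rewrite mem_flatten_tvars; exists a.
- case=> a [/InP Ha Hx]; apply/flattenP; exists (flatten (map tvars a.2)).
  + exact: map_f.
  + by rewrite mem_flatten_tvars.
Qed.

Lemma eq_inst_atom h h' a :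
  (forall x, Var x \in a.2 -> h x = h' x) -> inst_atom h a = inst_atom h' a.
Proof.
case: a => r l /= H; congr (_, _); apply/eq_in_map => -[x|c] //= Hx.
exact: H.
Qed.

Lemma inst_atom_comp f h a : fixes_consts f ->
  inst_atom (fun z => f (h z)) a = (a.1, map f (inst_atom h a).2).
Proof.
move=> Hf; case: a => r l /=; congr (_, _); rewrite -map_comp; apply/eq_map.
by case=> [x|c] //=; rewrite Hf.
Qed.

Lemma mem_inst_atom h a x : Var x \in a.2 -> h x \in (inst_atom h a).2.
Proof. by move=> Hx; apply/mapP; exists (Var x). Qed.

Lemma trig_val I d h x : trig I d h -> x \in vars (body_of d) ->
  exists2 a, a \in I & h x \in a.2.
Proof.
move=> Ht /varsP [a [Ha Hx]]; exists (inst_atom h a); first exact: Ht.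
exact: mem_inst_atom.
Qed.

Lemma tgd_fire_vals I n n' b hd h h' : trig I (Tgd b hd) h ->
  (forall x, x \in vars b -> h' x = h x) -> fresh_on h' (exvars b hd) n n' ->
  forall a, List.In a hd -> forall x, x \in (inst_atom h' a).2 ->
  [\/ exists c, x = Cst c, exists2 a0, a0 \in I & x \in a0.2 |
      exists k, x = Null k /\ n <= k < n'].
Proof.
move=> Ht Hh [_ [Hf _]] a Ha x /mapP [[z|c] Hz ->] /=; last by apply: Or31; exists c.
case Hzb : (z \in vars b).
- by apply: Or32; rewrite Hh //; exact: (trig_val Ht Hzb).
- apply/Or33/Hf; rewrite /exvars mem_filter Hzb /=.
  by apply/varsP; exists a.
Qed.

Lemma nulls_below_null_bound I : nulls_below I (null_bound I).
Proof.
move=> a Ha k Hk; rewrite /null_bound.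
pose nb (v : val) := if v is Null k then k.+1 else 0.
apply: (@leq_trans (\max_(v <- a.2) nb v)).
  exact: (@leq_bigmax_seq _ _ _ nb (Null k)).
exact: (@leq_bigmax_seq _ _ _ (fun a : atom => \max_(v <- a.2) nb v) a).
Qed.

Lemma exvars_nil_vars b hd x : exvars b hd = [::] -> x \in vars hd -> x \in vars b.
Proof.
move=> He Hx; apply/negPn/negP => Hn.
have : x \in exvars b hd by rewrite /exvars mem_filter Hn.
by rewrite He.
Qed.

Lemma inst_head_exvars_nil b hd h h' a : exvars b hd = [::] ->
  (forall x, x \in vars b -> h' x = h x) -> List.In a hd -> inst_atom h' a = inst_atom h a.
Proof.
move=> He Hh Ha; apply: eq_inst_atom => x Hx; apply/Hh/(exvars_nil_vars He).
by apply/varsP; exists a.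
Qed.

(** * The translation [sigma_tgd] *)

Definition cong_map (u w : val) (s : seq val) : nat -> val :=
  fun z => match z with 0 => u | 1 => w | z'.+2 => nth (Cst 0) s z' end.

Lemma map_sub_cong_args k i z h :
  map (sub h) (cong_args k i z) = mkseq (fun j => if j == i then h z else h j.+2) k.
Proof. by rewrite /cong_args /mkseq -map_comp; apply: eq_map => j /=; case: eqP. Qed.

Lemma cong_body_inst u w s i : i < size s -> nth (Cst 0) s i = u ->
  map (sub (cong_map u w s)) (cong_args (size s) i 0) = s.
Proof.
move=> Hi Hu; rewrite map_sub_cong_args -[in RHS](mkseq_nth (Cst 0) s) /mkseq.
by apply/eq_in_map => j _ /=; case: eqP => // ->.
Qed.

Lemma cong_head_inst u w s i : i < size s ->
  map (sub (cong_map u w s)) (cong_args (size s) i 1) = set_nth (Cst 0) s i w.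
Proof. by move=> Hi; rewrite map_sub_cong_args set_nth_mkseq. Qed.

Lemma cong_body_var1 E R k i : 1 \in vars [:: Eatom E 0 1; (R, cong_args k i 0)].
Proof. by apply/varsP; exists (Eatom E 0 1); split; [left|rewrite /= !inE eqxx orbT]. Qed.

Lemma cong_body_var E R k i j : j < k -> j != i ->
  j.+2 \in vars [:: Eatom E 0 1; (R, cong_args k i 0)].
Proof.
move=> Hj Hji; apply/varsP; exists (R, cong_args k i 0); split; first by right; left.
by apply/mapP; exists j; [rewrite mem_iota|rewrite ifN].
Qed.

Lemma cong_exvars E R k i :
  exvars [:: Eatom E 0 1; (R, cong_args k i 0)] [:: (R, cong_args k i 1)] = [::].
Proof.
apply: filter_nil => x /InP /varsP [a [[<-|//] /= /mapP [j Hj]]].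
case: eqP => [_ [->]|Hji [->]]; rewrite negbK; first exact: cong_body_var1.
by apply: cong_body_var => //; [rewrite mem_iota in Hj|apply/eqP].
Qed.

Lemma egd_tgd_exvars E b x y : x \in vars b -> y \in vars b ->
  exvars b [:: Eatom E x y; Eatom E y x] = [::].
Proof.
move=> Hx Hy; apply: filter_nil => z /InP /varsP [a [Ha]].
by case: Ha => [<-|[<-|//]]; rewrite /= !inE => /orP [] /eqP [->]; rewrite negbK.
Qed.

Section Translation.
Variables (sch : seq nat) (ar : nat -> nat) (E : nat) (S : seq dep).
Hypothesis wf_S : forall d, List.In d S -> dep_wf sch ar d.
Hypothesis E_fresh : E \notin sch.
Local Notation T := (sigma_tgd E ar S).

Lemma body_wf d a : List.In d S -> List.In a (body_of d) -> ratom_wf sch ar a.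
Proof. by move=> Hd; move: (wf_S Hd); case: d Hd => [b hd|b x y] /= _ [H _]; apply: H. Qed.

Lemma head_wf d a : List.In d S -> List.In a (head_of d) -> ratom_wf sch ar a.
Proof. by move=> Hd; move: (wf_S Hd); case: d Hd => [b hd|b x y] /= _ [_ H] //; apply: H. Qed.

Lemma egd_vars b x y : List.In (Egd b x y) S -> x \in vars b /\ y \in vars b.
Proof. by move=> /wf_S /= [_ []]. Qed.

Lemma sch_neq_E r : r \in sch -> r != E.
Proof. by move=> Hr; apply: contraNneq E_fresh => <-. Qed.

Lemma body_neq_E d a : List.In d S -> List.In a (body_of d) -> a.1 != E.
Proof. by move=> Hd Ha; apply: sch_neq_E; case: (body_wf Hd Ha). Qed.

Lemma head_neq_E d a : List.In d S -> List.In a (head_of d) -> a.1 != E.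
Proof. by move=> Hd Ha; apply: sch_neq_E; case: (head_wf Hd Ha). Qed.

Lemma used_syms_body d a : List.In d S -> List.In a (body_of d) -> a.1 \in used_syms S.
Proof.
move=> Hd Ha; rewrite mem_undup; apply/flattenP; exists (syms_dep d).
- by apply: map_f; apply/InP.
- by rewrite mem_cat map_f //; apply/InP.
Qed.

Lemma used_syms_sch r : r \in used_syms S -> r \in sch.
Proof.
rewrite mem_undup => /flattenP [l /mapP [d /InP Hd ->]].
rewrite mem_cat => /orP [] /mapP [a /InP Ha ->].
- by case: (body_wf Hd Ha).
- by case: (head_wf Hd Ha).
Qed.

Lemma used_syms_neq_E r : r \in used_syms S -> r != E.
Proof. by move/used_syms_sch/sch_neq_E. Qed.

Lemma sigma_tgd_tgd b hd : List.In (Tgd b hd) S -> List.In (Tgd b hd) T.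
Proof. by move=> H; apply/InP; rewrite mem_cat mem_filter /=; apply/orP; left; apply/InP. Qed.

Lemma sigma_tgd_egd b x y : List.In (Egd b x y) S ->
  List.In (Tgd b [:: Eatom E x y; Eatom E y x]) T.
Proof.
move=> H; apply/InP; rewrite !mem_cat; apply/orP; right; apply/orP; left.
apply/flattenP; exists (egd_to_tgd E (Egd b x y)); last by rewrite inE.
by apply: map_f; apply/InP.
Qed.

Lemma sigma_tgd_cong R i : R \in used_syms S -> i < ar R ->
  List.In (cong_tgd E R (ar R) i) T.
Proof.
move=> HR Hi; apply/InP; rewrite !mem_cat; apply/orP; right; apply/orP; right.
apply/flattenP; exists [seq cong_tgd E R (ar R) i | i <- iota 0 (ar R)].
- exact: map_f.
- by apply: map_f; rewrite mem_iota.
Qed.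

Lemma sigma_tgdP d : List.In d T ->
  (exists b hd, d = Tgd b hd /\ List.In (Tgd b hd) S) \/
  (exists b x y, d = Tgd b [:: Eatom E x y; Eatom E y x] /\ List.In (Egd b x y) S) \/
  (exists R i, d = cong_tgd E R (ar R) i /\ R \in used_syms S /\ i < ar R).
Proof.
move=> /InP; rewrite !mem_cat => /orP [|/orP []].
- by rewrite mem_filter => /andP []; case: d => // b hd _ /InP H; left; exists b, hd.
- case/flattenP=> l /mapP [d' /InP Hd ->]; case: d' Hd => // b x y Hd.
  by rewrite inE => /eqP ->; right; left; exists b, x, y.
- case/flattenP=> l /mapP [R HR ->] /mapP [i]; rewrite mem_iota add0n => /andP [_ Hi] ->.
  by right; right; exists R, i.
Qed.

Lemma sigma_tgd_is_tgd d : List.In d T -> is_tgd d.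
Proof. by case/sigma_tgdP=> [[b [hd [-> _]]]|[[b [x [y [-> _]]]]|[R [i [-> _]]]]]. Qed.

Lemma cong_tgd_notin R k i : ~ List.In (cong_tgd E R k i) S.
Proof. by move/body_neq_E => /(_ _ (or_introl erefl)); rewrite eqxx. Qed.

Lemma egd_tgd_notin b x y : ~ List.In (Tgd b [:: Eatom E x y; Eatom E y x]) S.
Proof. by move/head_neq_E => /(_ _ (or_introl erefl)); rewrite eqxx. Qed.

Lemma sigma_tgd_head_arity d a h : ar E = 2 -> List.In d T -> List.In a (head_of d) ->
  size (inst_atom h a).2 = ar (inst_atom h a).1.
Proof.
move=> HE /sigma_tgdP [[b [hd [-> Hd]]]|[[b [x [y [-> _]]]]|[R [i [-> _]]]]] /= Ha;
  rewrite size_map.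
- by case: (head_wf Hd Ha).
- by case: Ha => [<-|[<-|//]].
- by case: Ha => [<-|//]; rewrite /= size_map size_iota.
Qed.

End Translation.

Definition step_key (v : variant) d h := if v is Sobl then sobl_key d h else obl_key d h.
Definition record_key (v : variant) (k : key) F := if v is Std then F else k :: F.

Lemma step_key_dep v b hd h : step_key v (Tgd b hd) h = (Tgd b hd, (step_key v (Tgd b hd) h).2).
Proof. by case: v. Qed.

Lemma step_key_head v b hd h h0 : step_key v (Tgd b hd) h = step_key v (Tgd b hd) h0 ->
  exvars b hd = [::] -> forall a, List.In a hd -> inst_atom h a = inst_atom h0 a.
Proof.
move=> Hk He a Ha; apply: eq_inst_atom => x Hx.
have Hxh : x \in vars hd by apply/varsP; exists a.
have Hxb := exvars_nil_vars He Hxh.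
case: v Hk => /= [] [] /eq_in_map Hk; apply: Hk => //.
by rewrite /frontier mem_filter Hxh.
Qed.

Lemma chase_step_tgd v S I n F b hd h h' n' : v <> Core ->
  List.In (Tgd b hd) S -> trig I (Tgd b hd) h ->
  (v = Std -> active I (Tgd b hd) h) ->
  (v <> Std -> ~ List.In (step_key v (Tgd b hd) h) F) ->
  (forall x, x \in vars b -> h' x = h x) -> fresh_on h' (exvars b hd) n n' ->
  chase_step v S (St I n F)
    (St (I `|` inst_set h' hd) n' (record_key v (step_key v (Tgd b hd) h) F)).
Proof.
move=> Hv HS Ht Ha Hk Hh Hf.
have Hfire : fire I n (record_key v (step_key v (Tgd b hd) h) F) (Tgd b hd) h
    (St (I `|` inst_set h' hd) n' (record_key v (step_key v (Tgd b hd) h) F)).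
  by exists (I `|` inst_set h' hd), n'; split => //; exists h'.
case: v Hv Ha Hk Hfire => // _ Ha Hk Hfire; exists I, n, F, (Tgd b hd), h.
- by do 4 split => //; exact: Ha.
- by do 3 split => //; split => //; exact: Hk.
- by do 3 split => //; split => //; exact: Hk.
Qed.

Lemma chase_stepP v S I n F s' : v <> Core -> chase_step v S (St I n F) s' ->
  exists d h, [/\ List.In d S, trig I d h, v = Std -> active I d h,
    v <> Std -> ~ List.In (step_key v d h) F &
    fire I n (record_key v (step_key v d h) F) d h s'].
Proof.
by case: v => // _ [I0 [n0 [F0 [d [h [[-> -> ->] [H1 [H2 [H3 H4]]]]]]]]]; exists d, h.
Qed.

Lemma chase_step_Fail v S s : ~ chase_step v S Fail s.
Proof.
by case: v => [| | |[? [? [? []]]]] //= [? [? [? [? [? []]]]]].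
Qed.

Lemma egd_result_merge I n F p q I2 n2 F2 : p <> q -> egd_result I n F p q = St I2 n2 F2 ->
  exists u w, [/\ (u = p /\ w = q) \/ (u = q /\ w = p), exists k, u = Null k,
    I2 = rename (replace u w) I, n2 = n & F2 = F].
Proof.
rewrite /egd_result => Hne; have -> : (p == q) = false by apply/eqP.
case: p Hne => [c|a]; case: q => [c'|b] Hne //=.
- by case=> <- <- <-; exists (Null b), (Cst c); split; [right|exists b|..].
- by case=> <- <- <-; exists (Null a), (Cst c'); split; [left|exists a|..].
- case: ifP => _ [<- <- <-].
  + by exists (Null b), (Null a); split; [right|exists b|..].
  + by exists (Null a), (Null b); split; [left|exists a|..].
Qed.

(* A finite superset of the keys of the triggers on I. *)
Definition candidate_keys (S : seq dep) (I : instance) : seq key :=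
  flatten [seq [seq (d, vs) | vs <- seqs_over (vals I) (size (vars (body_of d)))] | d <- S].

Definition unfired S I (F : seq key) := count (fun k => k \notin F) (candidate_keys S I).

Lemma candidate_keys_trig S I d h : List.In d S -> trig I d h ->
  obl_key d h \in candidate_keys S I.
Proof.
move=> /InP Hd Ht; apply/flattenP; eexists; first exact: map_f Hd.
apply: map_f; rewrite -(size_map h); apply: mem_seqs_over; apply/allP => z /mapP [x Hx ->].
by case: (trig_val Ht Hx) => a Ha Hz; apply/valsP; exists a.
Qed.

Lemma unfired_fire S I F d h : List.In d S -> trig I d h -> ~ List.In (obl_key d h) F ->
  unfired S I (obl_key d h :: F) < unfired S I F.
Proof.
move=> Hd Ht Hk; apply: (count_lt_sub (x := obl_key d h)).
- by move=> y; rewrite inE negb_or => /andP [].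
- exact: candidate_keys_trig.
- by apply/negP => /InP.
- by rewrite inE eqxx.
Qed.

(* A homomorphism modulo E: E-atoms are collapsed instead of being mapped. *)
Record ehom (E : nat) (g : val -> val) (A B : instance) : Prop := {
  ehom_consts : fixes_consts g;
  ehom_atom : forall a, a \in A -> a.1 != E -> (a.1, map g a.2) \in B;
  ehom_Eatom : forall a, a \in A -> a.1 = E -> exists u w, a.2 = [:: u; w] /\ g u = g w }.

Lemma forall_fsetU (A B : instance) (P : atom -> Prop) :
  (forall a, a \in A -> P a) -> (forall a, a \in B -> P a) -> forall a, a \in A `|` B -> P a.
Proof. by move=> HA HB a; rewrite in_fsetU => /orP [/HA|/HB]. Qed.

Lemma nulls_below_fsetU A B n : nulls_below A n -> nulls_below B n -> nulls_below (A `|` B) n.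
Proof. by move=> HA HB; apply: forall_fsetU. Qed.

Lemma nulls_below_le A n n' : n <= n' -> nulls_below A n -> nulls_below A n'.
Proof. by move=> Hn HA a Ha k Hk; apply: leq_trans Hn; apply: HA Ha k Hk. Qed.

Lemma ehom_fsetU E g A B C : ehom E g A C -> ehom E g B C -> ehom E g (A `|` B) C.
Proof.
case=> Hc HA HAE [_ HB HBE]; split => //; first exact: forall_fsetU.
exact: forall_fsetU HAE HBE.
Qed.

Lemma hom_id A : hom id A A.
Proof. by split => // a Ha; rewrite map_id -surjective_pairing. Qed.

Lemma hom_comp g1 g2 A B C : hom g1 A B -> hom g2 B C -> hom (fun x => g2 (g1 x)) A C.
Proof.
move=> [H1 H2] [H3 H4]; split=> [c|a Ha]; first by rewrite H1 H3.
by rewrite map_comp; apply: H4 (H2 a Ha).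
Qed.

Lemma hom_sub g A B C : hom g A B -> C `<=` A -> hom g C B.
Proof. by move=> [H1 H2] /fsubsetP Hs; split => // a /Hs; apply: H2. Qed.

Lemma ehom_hom E g1 g2 A B C : ehom E g1 A B -> hom g2 B C -> ehom E (fun x => g2 (g1 x)) A C.
Proof.
move=> [H1 H2 H2'] [H3 H4]; split=> [c|a Ha HE|a Ha HE]; first by rewrite H1 H3.
- by rewrite map_comp; apply: H4 (H2 a Ha HE).
- by case: (H2' a Ha HE) => u [w [Hs He]]; exists u, w; rewrite He.
Qed.

Lemma ehom_sub E g A B C : ehom E g A B -> C `<=` A -> ehom E g C B.
Proof. by case=> Hc HA HAE /fsubsetP Hs; split => // a /Hs; [apply: HA|apply: HAE]. Qed.

Lemma ehom_of_hom E g A B : (forall a, a \in A -> a.1 != E) -> hom g A B -> ehom E g A B.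
Proof.
by move=> HnE [Hc Hg]; split=> // a Ha; [move=> _; apply: Hg|move/eqP; rewrite (negbTE (HnE a Ha))].
Qed.

Lemma hom_of_ehom E g A B : (forall a, a \in A -> a.1 != E) -> ehom E g A B -> hom g A B.
Proof. by move=> HnE [Hc Hg _]; split => // a Ha; apply: Hg Ha (HnE a Ha). Qed.

Lemma trig_hom p A B d h : hom p A B -> trig A d h -> trig B d (fun z => p (h z)).
Proof. by move=> [Hc Hp] Ht a Ha; rewrite inst_atom_comp //; apply: Hp (Ht a Ha). Qed.

Lemma trig_ehom E g A B d h : ehom E g A B -> (forall a, List.In a (body_of d) -> a.1 != E) ->
  trig A d h -> trig B d (fun z => g (h z)).
Proof.
by move=> [Hc Hn _] HnE Ht a Ha; rewrite inst_atom_comp //; apply: Hn (Ht a Ha) (HnE a Ha).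
Qed.

(** * Simulation of the standard, oblivious and semi-oblivious chase *)

Section Simulation.
Variables (sch : seq nat) (ar : nat -> nat) (E : nat) (S : seq dep) (v : variant).
Hypothesis wf_S : forall d, List.In d S -> dep_wf sch ar d.
Hypothesis E_fresh : E \notin sch.
Hypothesis E_arity : ar E = 2.
Hypothesis v_not_core : v <> Core.
Local Notation T := (sigma_tgd E ar S).
Local Notation step := (chase_step v T).

(* Relates a state (J, n, F) of the chase with S to a state (I', n, F') of the
   chase with T; the last two fields ensure that the triggers of T needed to
   simulate a step have not been fired yet. *)
Record simulation (rho : val -> val) (J : instance) (n : nat) (F : seq key)
    (I' : instance) (F' : seq key) : Prop := {
  sim_ehom : ehom E rho I' J;
  sim_fixJ : forall a, a \in J -> forall x, x \in a.2 -> rho x = x;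
  sim_fix_fresh : forall k, n <= k -> rho (Null k) = Null k;
  sim_nullsJ : nulls_below J n;
  sim_nullsI : nulls_below I' n;
  sim_arityJ : forall a, a \in J -> size a.2 = ar a.1;
  sim_arityI : forall a, a \in I' -> size a.2 = ar a.1;
  sim_fired_heads : forall b hd h, List.In (Tgd b hd) T -> exvars b hd = [::] ->
    List.In (step_key v (Tgd b hd) h) F' -> forall a, List.In a hd -> inst_atom h a \in I';
  sim_fired_keys : forall d vs, List.In d S -> is_tgd d ->
    List.In (d, vs) F' -> List.In (d, vs) F }.

Definition simulates rho J n F I' F' := simulation rho J n F I' F' /\
  forall a, a \in J -> a.1 \in used_syms S -> a \in I'.

Lemma fired_heads_fire rho J n F I' F' b0 hd0 h0 h' :
  simulation rho J n F I' F' -> (forall x, x \in vars b0 -> h' x = h0 x) ->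
  forall b hd h, List.In (Tgd b hd) T -> exvars b hd = [::] ->
  List.In (step_key v (Tgd b hd) h) (record_key v (step_key v (Tgd b0 hd0) h0) F') ->
  forall a, List.In a hd -> inst_atom h a \in I' `|` inst_set h' hd0.
Proof.
move=> HW Hh' b hd h HT He Hk a Ha; rewrite in_fsetU.
have Hnew : step_key v (Tgd b hd) h = step_key v (Tgd b0 hd0) h0 ->
    inst_atom h a \in inst_set h' hd0.
  move=> Hkey; move: (Hkey); rewrite step_key_dep (step_key_dep _ b0) => -[Eb Ehd _].
  subst b0 hd0; apply/inst_setP; exists a; split => //.
  by rewrite (step_key_head Hkey He Ha) (inst_head_exvars_nil He Hh' Ha).
have Hold := sim_fired_heads HW HT He.
case: v v_not_core Hk Hnew Hold => //= _; first by move=> Hk _ /(_ h Hk a Ha) ->.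
all: by case=> [Hkey /(_ (esym Hkey)) ->|Hk _ /(_ h Hk a Ha) ->]; rewrite ?orbT.
Qed.

Section TgdStep.
Variables (rho : val -> val) (J : instance) (n : nat) (F : seq key).
Variables (I' : instance) (F' : seq key) (b hd : seq ratom) (h h' : nat -> val) (n2 : nat).
Hypothesis HI : simulates rho J n F I' F'.
Hypothesis HS : List.In (Tgd b hd) S.
Hypothesis Ht : trig J (Tgd b hd) h.
Hypothesis Hh' : forall x, x \in vars b -> h' x = h x.
Hypothesis Hfresh : fresh_on h' (exvars b hd) n n2.

Lemma sim_tgd_step : (v = Std -> active J (Tgd b hd) h) ->
  (v <> Std -> ~ List.In (step_key v (Tgd b hd) h) F) ->
  step (St I' n F') (St (I' `|` inst_set h' hd) n2 (record_key v (step_key v (Tgd b hd) h) F')).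
Proof.
case: HI => HW HJI Ha Hk; apply: chase_step_tgd => //.
- exact: sigma_tgd_tgd.
- by move=> a Hab; apply: HJI (Ht Hab) _; apply: used_syms_body HS Hab.
- move=> Hv [h2 [Hh2 Hhd]]; apply: (Ha Hv); exists (fun z => rho (h2 z)); split.
  + move=> x Hx; rewrite Hh2 //; case: (trig_val Ht Hx) => a0 Ha0 Hx0.
    exact: (sim_fixJ HW Ha0 Hx0).
  + move=> a Hahd; rewrite inst_atom_comp; last exact: (ehom_consts (sim_ehom HW)).
    by apply: (ehom_atom (sim_ehom HW) (Hhd a Hahd)); apply: (head_neq_E wf_S E_fresh HS).
- move=> Hv Hk'; apply: (Hk Hv); rewrite step_key_dep; apply: (sim_fired_keys HW) => //.
  by rewrite -step_key_dep.
Qed.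

Lemma sim_tgd_inv : simulates rho (J `|` inst_set h' hd) n2
  (record_key v (step_key v (Tgd b hd) h) F)
  (I' `|` inst_set h' hd) (record_key v (step_key v (Tgd b hd) h) F').
Proof.
case: HI => HW HJI; have Hn : n <= n2 by case: Hfresh.
have Hvals := tgd_fire_vals Ht Hh' Hfresh.
have Hfix a : a \in inst_set h' hd -> forall x, x \in a.2 -> rho x = x.
  case/inst_setP=> a0 [Ha0 ->] x /(Hvals _ Ha0) [[c ->]|[a1 Ha1 Hx1]|[k [-> /andP [Hk _]]]].
  - exact: (ehom_consts (sim_ehom HW)).
  - exact: (sim_fixJ HW Ha1 Hx1).
  - exact: (sim_fix_fresh HW).
have Hnulls : nulls_below (inst_set h' hd) n2.
  move=> a /inst_setP [a0 [Ha0 ->]] k /(Hvals _ Ha0) [[c //]|[a1 Ha1 Hx1]|[k' [[->] /andP [_ //]]]].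
  exact: nulls_below_le Hn (sim_nullsJ HW) _ Ha1 _ Hx1.
have HnE a : a \in inst_set h' hd -> a.1 != E.
  by case/inst_setP=> a0 [Ha0 ->]; apply: (head_neq_E wf_S E_fresh HS).
have Har a : a \in inst_set h' hd -> size a.2 = ar a.1.
  by case/inst_setP=> a0 [Ha0 ->]; rewrite /= size_map; case: (head_wf wf_S HS Ha0).
split; last by apply: forall_fsetU => a Ha Hu; rewrite in_fsetU; [rewrite HJI|rewrite Ha orbT].
case: (HW) => [[Hc Hat HEat] HfixJ Hfresh' HnJ HnI HaJ HaI _ Hkeys]; split.
- split => //.
  + apply: forall_fsetU => [a Ha HaE|a Ha _]; rewrite in_fsetU; first by rewrite Hat.
    have -> : map rho a.2 = a.2 by apply: map_id_in => x; apply: Hfix.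
    by rewrite -surjective_pairing Ha orbT.
  + apply: forall_fsetU => // a /HnE /negP HaE /eqP; contradiction.
- exact: forall_fsetU.
- by move=> k Hk; apply: Hfresh'; apply: leq_trans Hk.
- exact/nulls_below_fsetU/Hnulls/nulls_below_le/HnJ.
- exact/nulls_below_fsetU/Hnulls/nulls_below_le/HnI.
- exact: forall_fsetU.
- exact: forall_fsetU.
- exact: fired_heads_fire HW Hh'.
- move=> d vs Hd Htg; case: v v_not_core => //= _; first exact: Hkeys.
  all: by case=> [<-|/(Hkeys _ _ Hd Htg)]; [left|right].
Qed.

End TgdStep.

Lemma simulation_record_F rho J n F I' F' k :
  simulation rho J n F I' F' -> simulation rho J n (k :: F) I' F'.
Proof. by case=> *; split=> // d vs Hd Ht Hk; right; auto. Qed.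

Lemma simulation_add rho J n F I' F' b hd h :
  simulation rho J n F I' F' -> List.In (Tgd b hd) T -> ~ List.In (Tgd b hd) S ->
  ehom E rho (inst_set h hd) J -> nulls_below (inst_set h hd) n ->
  (forall a, a \in inst_set h hd -> size a.2 = ar a.1) ->
  simulation rho J n F (I' `|` inst_set h hd) (record_key v (step_key v (Tgd b hd) h) F').
Proof.
move=> HW HT HnS Hhom Hnulls Har; split; try by case: HW.
- exact: ehom_fsetU (sim_ehom HW) Hhom.
- exact: nulls_below_fsetU (sim_nullsI HW) Hnulls.
- exact: forall_fsetU (sim_arityI HW) Har.
- exact: fired_heads_fire HW (fun _ _ => erefl).
- move=> d vs Hd Htg; case: v v_not_core => //= _; first exact: (sim_fired_keys HW).
  all: by case=> [[Ed _]|/(sim_fired_keys HW Hd Htg)] //; move: Hd; rewrite -Ed.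
Qed.

(* By [sim_fired_heads], such a trigger has not been recorded yet, so every variant
   may fire it. *)
Lemma sim_step_exvars_nil rho J n F I' F' b hd h a0 :
  simulation rho J n F I' F' -> List.In (Tgd b hd) T -> exvars b hd = [::] ->
  trig I' (Tgd b hd) h -> List.In a0 hd -> inst_atom h a0 \notin I' ->
  step (St I' n F') (St (I' `|` inst_set h hd) n (record_key v (step_key v (Tgd b hd) h) F')).
Proof.
move=> HW HT He Ht Ha0 Hnot; apply: chase_step_tgd => //.
- move=> _ [h2 [Hh2 Hhd]]; have := Hhd _ Ha0.
  by rewrite (inst_head_exvars_nil He Hh2 Ha0); apply/negP.
- by move=> _ /(sim_fired_heads HW HT He) /(_ _ Ha0); apply/negP.
- by rewrite He; split => //; split.
Qed.

Definition sim_reach rho J n F I1 F1 I2 F2 :=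
  [/\ star step (St I1 n F1) (St I2 n F2), simulation rho J n F I2 F2 & I1 `<=` I2].

Lemma sim_reach_refl rho J n F I1 F1 :
  simulation rho J n F I1 F1 -> sim_reach rho J n F I1 F1 I1 F1.
Proof. by move=> HW; split => //; apply: star_refl. Qed.

Lemma sim_reach_trans rho J n F I1 F1 I2 F2 I3 F3 :
  sim_reach rho J n F I1 F1 I2 F2 -> sim_reach rho J n F I2 F2 I3 F3 ->
  sim_reach rho J n F I1 F1 I3 F3.
Proof.
case=> H12 _ S12 [H23 HW S23]; split => //; first exact: star_trans H12 H23.
exact: fsubset_trans S12 S23.
Qed.

Lemma sim_cong_step rho J n F I1 F1 u w c i :
  simulation rho J n F I1 F1 -> (E, [:: u; w]) \in I1 -> c \in I1 -> c.1 \in used_syms S ->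
  i < size c.2 -> nth (Cst 0) c.2 i = u ->
  exists I2 F2, sim_reach rho J n F I1 F1 I2 F2 /\ (c.1, set_nth (Cst 0) c.2 i w) \in I2.
Proof.
move=> HW HEuw Hc Hu Hi Hn.
case Hin : ((c.1, set_nth (Cst 0) c.2 i w) \in I1).
  by exists I1, F1; split => //; exact: sim_reach_refl.
have Har : size c.2 = ar c.1 by exact: (sim_arityI HW Hc).
pose h := cong_map u w c.2.
pose b := [:: Eatom E 0 1; (c.1, cong_args (ar c.1) i 0)].
pose hd := [:: (c.1, cong_args (ar c.1) i 1)].
have HT : List.In (Tgd b hd) T by apply: sigma_tgd_cong => //; rewrite -Har.
have Hhead : inst_atom h (c.1, cong_args (ar c.1) i 1) = (c.1, set_nth (Cst 0) c.2 i w).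
  by rewrite /inst_atom /= -Har cong_head_inst.
have Hnew : inst_set h hd = [fset (c.1, set_nth (Cst 0) c.2 i w)].
  by apply/fsetP => a; rewrite mem_inst_set inE /= inE Hhead.
have Hrho : rho w = rho u by case: (ehom_Eatom (sim_ehom HW) HEuw erefl) => u' [w' [[-> ->]]].
exists (I1 `|` inst_set h hd), (record_key v (step_key v (Tgd b hd) h) F1).
split; last by rewrite in_fsetU Hnew inE eqxx orbT.
split; last exact: fsubsetUl.
- apply: star_step (star_refl _ _) _.
  apply: (sim_step_exvars_nil (a0 := (c.1, cong_args (ar c.1) i 1)) HW) => //.
  + exact: cong_exvars.
  + move=> a /= [<-|[<-|//]]; rewrite /inst_atom //=.
    by rewrite -Har cong_body_inst // -surjective_pairing.
  + by left.
  + by rewrite Hhead Hin.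
- apply: simulation_add; rewrite ?Hnew //.
  + exact: (cong_tgd_notin wf_S E_fresh).
  + split; first exact: (ehom_consts (sim_ehom HW)).
    * move=> a; rewrite inE => /eqP -> /= HnE.
      rewrite (map_set_nth_same Hi); first exact: (ehom_atom (sim_ehom HW) Hc HnE).
      by rewrite Hn Hrho.
    * move=> a; rewrite inE => /eqP -> /= HE.
      by move: (used_syms_neq_E wf_S E_fresh Hu); rewrite HE eqxx.
  + move=> a; rewrite inE => /eqP -> k /(mem_set_nth_or Hi) [/(sim_nullsI HW Hc)//|Hw].
    by apply: (sim_nullsI HW HEuw); rewrite -Hw !inE eqxx orbT.
  + by move=> a; rewrite inE => /eqP -> /=; rewrite size_set_nth (maxn_idPr Hi).
Qed.

Definition replace_prefix (u w : val) (s : seq val) j :=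
  mkseq (fun k => if k < j then replace u w (nth (Cst 0) s k) else nth (Cst 0) s k) (size s).

Lemma replace_prefix0 u w s : replace_prefix u w s 0 = s.
Proof. by rewrite /replace_prefix -[in RHS](mkseq_nth (Cst 0) s). Qed.

Lemma replace_prefix_size u w s : replace_prefix u w s (size s) = map (replace u w) s.
Proof.
rewrite /replace_prefix -[in RHS](mkseq_nth (Cst 0) s) /mkseq -map_comp.
by apply/eq_in_map => k; rewrite mem_iota /= => ->.
Qed.

Lemma replace_prefixS u w s j : j < size s ->
  replace_prefix u w s j.+1 =
  if nth (Cst 0) s j == u then set_nth (Cst 0) (replace_prefix u w s j) j w
  else replace_prefix u w s j.
Proof.
move=> Hj; case: eqP => Hn; last first.
  apply/eq_in_map => k _ /=; rewrite ltnS leq_eqVlt.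
  by case: (ltngtP k j) => //= ->; rewrite /replace ifN //; apply/eqP.
apply: (@eq_from_nth _ (Cst 0)); first by rewrite size_set_nth !size_mkseq (maxn_idPr _).
move=> k; rewrite size_mkseq => Hk; rewrite nth_set_nth /= !nth_mkseq //.
case: eqP => [->|/eqP Hkj]; first by rewrite ltnSn /replace Hn eqxx.
by rewrite ltnS leq_eqVlt (negbTE Hkj).
Qed.

Lemma sim_replace_atom rho J n F I1 F1 u w a :
  simulation rho J n F I1 F1 -> (E, [:: u; w]) \in I1 -> a \in I1 -> a.1 \in used_syms S ->
  exists I2 F2, sim_reach rho J n F I1 F1 I2 F2 /\ (a.1, map (replace u w) a.2) \in I2.
Proof.
move=> HW HEuw Ha Hu; rewrite -replace_prefix_size.
elim: {-2}(size a.2) (leqnn (size a.2)) => [_|j IH Hj].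
  by exists I1, F1; rewrite replace_prefix0 -surjective_pairing; split => //; exact: sim_reach_refl.
have [I2 [F2 [Hr2 Hin]]] := IH (ltnW Hj).
rewrite (replace_prefixS _ _ Hj); case: eqP => Hn; last by exists I2, F2.
have [_ HW2 /fsubsetP Hsub] := Hr2.
have [||I3 [F3 [Hr3 Hin3]]] := sim_cong_step (i := j) HW2 (Hsub _ HEuw) Hin Hu.
- by rewrite size_mkseq.
- by rewrite nth_mkseq // ltnn.
by exists I3, F3; split => //; exact: sim_reach_trans Hr2 Hr3.
Qed.

Lemma sim_replace_atoms rho J n F I1 F1 u w (L : seq atom) :
  simulation rho J n F I1 F1 -> (E, [:: u; w]) \in I1 ->
  {in L, forall a, a \in I1 /\ a.1 \in used_syms S} ->
  exists I2 F2, sim_reach rho J n F I1 F1 I2 F2 /\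
    {in L, forall a, (a.1, map (replace u w) a.2) \in I2}.
Proof.
elim: L I1 F1 => [|a L IH] I1 F1 HW HE HL.
  by exists I1, F1; split => //; exact: sim_reach_refl.
have [Ha Hu] := HL a (mem_head _ _).
have [I2 [F2 [Hr2 Hin]]] := sim_replace_atom HW HE Ha Hu.
have [_ HW2 /fsubsetP Hsub] := Hr2.
have [|I3 [F3 [Hr3 Hin3]]] := IH I2 F2 HW2 (Hsub _ HE).
  move=> b Hb; have [Hb1 Hb2] : b \in I1 /\ b.1 \in used_syms S by apply: HL; rewrite inE Hb orbT.
  by split => //; exact: Hsub.
exists I3, F3; split; first exact: sim_reach_trans Hr2 Hr3.
move=> b; rewrite inE => /predU1P [->|]; last exact: Hin3.
by have [_ _ /fsubsetP] := Hr3; apply.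
Qed.

Lemma simulation_merge rho J n F F2 I' F' u w :
  simulation rho J n F I' F' -> (exists k, u = Null k) -> u \in vals J -> w \in vals J ->
  u <> w -> (forall k, List.In k F -> List.In k F2) ->
  simulation (fun z => replace u w (rho z)) (rename (replace u w) J) n F2 I' F'.
Proof.
move=> HW [ku Hku] /valsP [au Hau Hu] /valsP [aw Haw Hw] Huw HF.
have Hrw : rho w = w by exact: (sim_fixJ HW Haw Hw).
have Hrpw : replace u w w = w by rewrite /replace ifN //; apply/eqP => /esym.
have Hku' : ku < n by apply: (sim_nullsJ HW Hau); rewrite -Hku.
case: HW => [[Hc Hat HEat] HfixJ Hfresh HnJ HnI HaJ HaI Hheads Hkeys].
split => //.
- split => [c|a Ha HnE|a Ha HE]; first by rewrite Hc /replace Hku.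
  + by have := mem_rename (replace u w) (Hat _ Ha HnE); rewrite /= -map_comp.
  + by case: (HEat a Ha HE) => u' [w' [H1 H2]]; exists u', w'; rewrite H2.
- move=> a2 /renameP [a Ha ->] z /mapP [y Hy ->].
  case: (eqVneq y u) => [->|Hyu]; first by rewrite /replace eqxx Hrw -/(replace u w w).
  by rewrite /replace (negbTE Hyu) (HfixJ _ Ha _ Hy) (negbTE Hyu).
- move=> k Hk; rewrite Hfresh // /replace Hku; case: eqP => // [[Ek]].
  by move: Hk; rewrite Ek leqNgt Hku'.
- move=> a2 /renameP [a Ha ->] k /mapP [y Hy]; rewrite /replace; case: eqP => _ Hk.
  + by apply: (HnJ _ Haw); rewrite Hk.
  + by apply: (HnJ _ Ha); rewrite Hk.
- by move=> a2 /renameP [a Ha ->]; rewrite /= size_map HaJ.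
- by move=> d vs Hd Ht Hk; apply/HF/Hkeys.
Qed.

Section EgdStep.
Variables (rho : val -> val) (J : instance) (n : nat) (F : seq key).
Variables (I' : instance) (F' : seq key) (b : seq ratom) (x y : nat) (h : nat -> val).
Variables (u w : val).
Hypothesis HI : simulates rho J n F I' F'.
Hypothesis HS : List.In (Egd b x y) S.
Hypothesis Ht : trig J (Egd b x y) h.
Hypothesis Hxy : h x <> h y.
Hypothesis Huw : (u = h x /\ w = h y) \/ (u = h y /\ w = h x).
Hypothesis u_null : exists k, u = Null k.

Local Notation hd := [:: Eatom E x y; Eatom E y x].
Local Notation I1 := (I' `|` inst_set h hd).
Local Notation F1 := (record_key v (step_key v (Tgd b hd) h) F').

Lemma egd_trigger_vals z : z = h x \/ z = h y -> z \in vals J /\ rho z = z.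
Proof.
have [HW _] := HI.
have [Hxb Hyb] := egd_vars wf_S HS.
have [ax Hax Hx] := trig_val Ht Hxb; have [ay Hay Hy] := trig_val Ht Hyb.
have Hrx := sim_fixJ HW Hax Hx; have Hry := sim_fixJ HW Hay Hy.
by case=> ->; split => //; apply/valsP; [exists ax|exists ay].
Qed.

Lemma sim_egd_tgd_step : step (St I' n F') (St I1 n F1).
Proof.
have [HW HJI] := HI.
have [Hxb Hyb] := egd_vars wf_S HS.
apply: (sim_step_exvars_nil (a0 := Eatom E x y) HW) => //.
- exact: sigma_tgd_egd.
- exact: (egd_tgd_exvars E Hxb Hyb).
- by move=> a Ha; apply: (HJI _ (Ht Ha)); apply: used_syms_body HS Ha.
- by left.
apply/negP => /(ehom_Eatom (sim_ehom HW)) /(_ erefl) [u' [w' [[<- <-]]]].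
by rewrite (proj2 (egd_trigger_vals (or_introl erefl)))
  (proj2 (egd_trigger_vals (or_intror erefl))).
Qed.

Lemma sim_egd_tgd_inv : simulation (fun z => replace u w (rho z)) (rename (replace u w) J) n
  (record_key v (step_key v (Egd b x y) h) F) I1 F1.
Proof.
have [HW _] := HI.
have [HuJ Hru] : u \in vals J /\ rho u = u by apply: egd_trigger_vals; case: Huw => -[->]; auto.
have [HwJ Hrw] : w \in vals J /\ rho w = w by apply: egd_trigger_vals; case: Huw => -[_ ->]; auto.
have Hnull z : z = h x \/ z = h y -> forall k, z = Null k -> k < n.
  move=> /egd_trigger_vals [/valsP [a0 Ha0 Hz] _] k Ek.
  by apply: (sim_nullsJ HW Ha0); rewrite -Ek.
have Hmerge z : z = h x \/ z = h y -> replace u w (rho z) = w.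
  move=> Hz; rewrite (proj2 (egd_trigger_vals Hz)) /replace.
  case: Huw Hz => -[-> ->] [] ->; rewrite ?eqxx //; case: eqP => // /esym.
apply: simulation_add.
- apply: simulation_merge HW u_null HuJ HwJ _ _; first by case: Huw => -[-> ->] // /esym.
  by case: (v) => //= ? ?; right.
- exact: sigma_tgd_egd.
- exact: (egd_tgd_notin wf_S E_fresh).
- split=> [c|a|a].
  + by rewrite (ehom_consts (sim_ehom HW)) /replace; case: u_null => k ->.
  + by rewrite mem_inst_set !inE => /orP [] /eqP -> /=; rewrite eqxx.
  + rewrite mem_inst_set !inE => /orP [] /eqP -> _ /=.
    * by exists (h x), (h y); rewrite !Hmerge; auto.
    * by exists (h y), (h x); rewrite !Hmerge; auto.
- move=> a; rewrite mem_inst_set !inE => /orP [] /eqP -> k; rewrite /= !inE;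
    by case/orP=> /eqP Hk; apply: (Hnull _ _ k (esym Hk)); auto.
- by move=> a; rewrite mem_inst_set !inE => /orP [] /eqP -> /=; rewrite E_arity.
Qed.

Lemma sim_egd : exists rho2 I2 F2', plus step (St I' n F') (St I2 n F2') /\
  simulates rho2 (rename (replace u w) J) n (record_key v (step_key v (Egd b x y) h) F) I2 F2'.
Proof.
have [_ HJI] := HI.
have HEuw : (E, [:: u; w]) \in I1.
  rewrite in_fsetU mem_inst_set /= !inE.
  by case: Huw => -[-> ->]; rewrite eqxx ?orbT.
pose L := [seq a <- enum_fset I1 | a.1 \in used_syms S].
have [|I2 [F2' [[Hs2 HW2 _] Hin]]] := sim_replace_atoms (L := L) sim_egd_tgd_inv HEuw.
  by move=> a; rewrite mem_filter => /andP [].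
exists (fun z => replace u w (rho z)), I2, F2'; split.
  by exists (St I1 n F1); first exact: sim_egd_tgd_step.
split => // _ /renameP [a Ha ->] /= Hu; apply: Hin.
by rewrite mem_filter Hu /= in_fsetU HJI.
Qed.

End EgdStep.

Lemma sim_step rho J n F I' F' s' :
  simulates rho J n F I' F' -> chase_step v S (St J n F) s' -> s' <> Fail ->
  exists J2 n2 F2, s' = St J2 n2 F2 /\
    ((exists rho2 I2 F2', plus step (St I' n F') (St I2 n2 F2') /\
        simulates rho2 J2 n2 F2 I2 F2') \/
     [/\ J2 = J, n2 = n, unfired S J F2 < unfired S J F & simulates rho J n F2 I' F']).
Proof.
move=> HI /(chase_stepP v_not_core) [d [h [Hd Ht Ha Hk]]].
case: d Hd Ht Ha Hk => [b hd|b x y] Hd Ht Ha Hk.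
  case=> J2 [n2 [[h' [Hh' [Hfr ->]]] ->]] _; do 3 eexists; split; first reflexivity.
  left; do 3 eexists; split; last exact: (sim_tgd_inv HI Hd Ht Hh' Hfr).
  by eexists; [exact: (sim_tgd_step HI Hd Ht Hh' Hfr)|exact: star_refl].
rewrite /fire; case: (eqVneq (h x) (h y)) => Hxy; last first.
  have {}Hxy : h x <> h y by apply/eqP.
  case Hr : egd_result => [J2 n2 F2|] -> // _; do 3 eexists; split; first reflexivity.
  have [u [w [Huw Hu -> -> ->]]] := egd_result_merge Hxy Hr.
  by left; exact: (sim_egd HI Hd Ht Hxy Huw Hu).
have HvS : v <> Std by move=> /Ha.
have Hkey : step_key v (Egd b x y) h = obl_key (Egd b x y) h by case: (v).
have Hrec : record_key v (obl_key (Egd b x y) h) F = obl_key (Egd b x y) h :: F.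
  by case: (v) HvS.
rewrite Hkey Hrec /egd_result Hxy eqxx => -> _; do 3 eexists; split; first reflexivity.
right; split => //; first by apply: unfired_fire => //; rewrite -Hkey; apply: Hk.
by case: HI => HW HJI; split => //; apply: simulation_record_F.
Qed.

Definition simulated (f : nat -> state) s := exists k rho J n F I' F',
  [/\ f k = St J n F, s = St I' n F' & simulates rho J n F I' F'].

(* Steps that fire an egd trigger without effect consume a key, so they
   cannot go on forever: induction on the number of unfired keys. *)
Lemma simulated_progress f : (forall k, chase_step v S (f k) (f k.+1)) ->
  forall s, simulated f s -> exists2 s', simulated f s' & plus step s s'.
Proof.
move=> Hf _ [k [rho [J [n [F [I' [F' [Hfk -> HI]]]]]]]].
elim: {F}(unfired S J F).+1 {-2}F k (ltnSn (unfired S J F)) Hfk HI => // m IH F k Hm Hfk HI.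
have HnF : f k.+1 <> Fail by move=> HF; apply: (@chase_step_Fail v S (f k.+2)); rewrite -HF.
have Hs := Hf k; rewrite Hfk in Hs.
case: (sim_step HI Hs HnF) => J2 [n2 [F2 [Hk1 [[rho2 [I2 [F2' [Hp HI2]]]]|[EJ En Hlt HI2]]]]].
  by exists (St I2 n2 F2'); first by exists k.+1, rho2, J2, n2, F2, I2, F2'.
by subst J2 n2; apply: IH (leq_trans Hlt Hm) Hk1 HI2.
Qed.

Lemma simulates_init I : inst_wf sch ar I -> simulates id I (null_bound I) [::] I [::].
Proof.
move=> HI; split => //; split => //; try exact: nulls_below_null_bound.
- split => // a Ha; first by rewrite map_id -surjective_pairing.
  by move=> HaE; case: (HI a Ha); rewrite HaE (negbTE E_fresh).
- by move=> a Ha; case: (HI a Ha).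
- by move=> a Ha; case: (HI a Ha).
Qed.

Lemma terminates_of_sigma_tgd I : inst_wf sch ar I -> terminates v T I -> terminates v S I.
Proof.
move=> HI Hterm [f [Hf0 Hf]]; apply: Hterm.
apply: (infinite_run (P := simulated f)); last exact: simulated_progress.
by exists 0, id, I, (null_bound I), [::], I, [::]; split => //; exact: simulates_init.
Qed.

End Simulation.

(** * Cores and parallel firings *)

Lemma core_exists (U : instance) : exists K, is_core_of K U.
Proof.
suff: forall m (K : instance), #|` K| <= m -> K `<=` U -> (exists g, hom g U K) ->
    exists K', is_core_of K' U.
  by move/(_ #|` U| U (leqnn _) (fsubset_refl _)); apply; exists id; exact: hom_id.
elim=> [|m IH] K Hm Hsub Hg.
  exists K; split => //; split => // C' /fproper_ltn_card; rewrite ltnNge.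
  by move/negP; case; apply: leq_trans Hm _.
case: (classic (exists C', C' `<` K /\ exists g, hom g K C')) => [[C' [Hp [g2 Hg2]]]|Hn].
  apply: (IH C'); first by rewrite -ltnS; apply: leq_trans (fproper_ltn_card Hp) Hm.
    exact: fsubset_trans (fproper_sub Hp) Hsub.
  by case: Hg => g Hg; exists (fun x => g2 (g x)); exact: hom_comp Hg Hg2.
by exists K; split => //; split => // C' Hp Hh; apply: Hn; exists C'.
Qed.

(* An endomorphism mapping K onto K is injective on the values of K, hence
   has an inverse homomorphism. *)
Lemma onto_endo_inverse (K : instance) phi : fixes_consts phi -> rename phi K = K ->
  exists psi, hom psi K K /\ forall x, x \in vals K -> psi (phi x) = x.
Proof.
move=> Hc HK.
have Hinto x : x \in vals K -> phi x \in vals K.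
  case/valsP=> a Ha Hx; apply/valsP; exists (a.1, map phi a.2); last exact: map_f.
  by rewrite -[in X in _ \in X]HK; exact: mem_rename.
have Hsurj x : x \in vals K -> exists2 y, y \in vals K & x = phi y.
  case/valsP=> a; rewrite -[in X in _ \in X]HK => /renameP [b Hb ->] /mapP [y Hy ->].
  by exists y => //; apply/valsP; exists b.
have Hinj : {in vals K &, injective phi}.
  move=> x y Hx Hy; apply: (@uniq_map_inj _ _ phi (undup (vals K))); rewrite ?mem_undup //.
  apply: (leq_size_uniq (undup_uniq (vals K))); last by rewrite size_map.
  by move=> z; rewrite mem_undup => /Hsurj [y' Hy' ->]; rewrite map_f ?mem_undup.
pose psi x := match excluded_middle_informative (exists y, y \in vals K /\ phi y = x) with
  | left H => proj1_sig (constructive_indefinite_description _ H) | right _ => x end.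
have Hpsi x : x \in vals K -> psi (phi x) = x.
  move=> Hx; rewrite /psi; case: excluded_middle_informative => [H|[]]; last by exists x.
  by case: (proj2_sig (constructive_indefinite_description _ H)) => H1 /Hinj; apply.
exists psi; split => //; split.
- move=> c; rewrite /psi; case: excluded_middle_informative => // H.
  case: (proj2_sig (constructive_indefinite_description _ H)) => H1 H2.
  apply: (Hinj _ _ H1); last by rewrite H2 Hc.
  by rewrite -H2; apply: Hinto H1.
- move=> a; rewrite -[in X in _ \in X -> _]HK => /renameP [b Hb ->] /=.
  rewrite -map_comp map_id_in; first by rewrite -surjective_pairing.
  by move=> x Hx /=; apply: Hpsi; apply/valsP; exists b.
Qed.

Lemma size_undup_vals_merge (J : instance) u w : u <> w -> u \in vals J -> w \in vals J ->
  size (undup (vals (rename (replace u w) J))) < size (undup (vals J)).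
Proof.
move=> Huw Hu Hw; apply: (@leq_ltn_trans (size (undup (map (replace u w) (vals J))))).
  apply: uniq_leq_size; first exact: undup_uniq.
  move=> x; rewrite !mem_undup => /valsP [a2 /renameP [a Ha ->] /mapP [y Hy ->]].
  by apply: map_f; apply/valsP; exists a.
apply: (size_undup_map_lt Huw) => //.
by rewrite /replace eqxx ifN //; apply/eqP => /esym.
Qed.

Definition firing := (dep * (nat -> val) * (nat -> val))%type.

Definition parallel_union (J : instance) (ts : seq firing) : instance :=
  foldr (fun t acc => inst_set t.2 (head_of t.1.1) `|` acc) J ts.

Lemma parallel_unionP J ts a : a \in parallel_union J ts -> a \in J \/
  exists t ha, [/\ List.In t ts, List.In ha (head_of t.1.1) & a = inst_atom t.2 ha].
Proof.
elim: ts => [|t ts IH] /=; first by left.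
rewrite in_fsetU => /orP [/inst_setP [ha [Hha ->]]|/IH [|[t' [ha [H1 H2 H3]]]]]; [|by left|].
- by right; exists t, ha; split; first left.
- by right; exists t', ha; split; first right.
Qed.

Lemma parallel_union_sub J ts : J `<=` parallel_union J ts.
Proof. by elim: ts => [|t ts IH] //=; exact: fsubset_trans IH (fsubsetUr _ _). Qed.

Lemma mem_parallel_union_head J ts t ha : List.In t ts -> List.In ha (head_of t.1.1) ->
  inst_atom t.2 ha \in parallel_union J ts.
Proof.
elim: ts => [|t' ts IH] //= [<-|Ht] Hha; rewrite in_fsetU.
- by rewrite mem_inst_set map_f //; apply/InP.
- by rewrite IH ?orbT.
Qed.

Record parallel_firing (S : seq dep) (J : instance) (n n' : nat) (ts : seq firing) : Prop := {
  pf_dep : forall t, List.In t ts -> List.In t.1.1 S /\ is_tgd t.1.1;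
  pf_trig : forall t, List.In t ts -> trig J t.1.1 t.1.2;
  pf_active : forall t, List.In t ts -> active J t.1.1 t.1.2;
  pf_body : forall t, List.In t ts -> forall x, x \in vars (body_of t.1.1) -> t.2 x = t.1.2 x;
  pf_fresh : forall t, List.In t ts -> forall z, z \in exvars_of t.1.1 ->
    exists k, t.2 z = Null k /\ n <= k < n';
  pf_inj : forall t1 t2 z1 z2, List.In t1 ts -> List.In t2 ts ->
    z1 \in exvars_of t1.1.1 -> z2 \in exvars_of t2.1.1 -> t1.2 z1 = t2.2 z2 -> t1 = t2 /\ z1 = z2;
  pf_all : forall d h, List.In d S -> is_tgd d -> trig J d h -> active J d h ->
    exists2 t, List.In t ts & obl_key t.1.1 t.1.2 = obl_key d h }.

Definition egd_active (S : seq dep) (J : instance) :=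
  exists d h, [/\ List.In d S, is_egd d, trig J d h & active J d h].

Lemma core_stepP S J n F s' : core_step S (St J n F) s' ->
  (exists d h, [/\ List.In d S, is_egd d, trig J d h, active J d h & fire J n F d h s']) \/
  [/\ ~ egd_active S J & exists ts n' K, [/\ ts <> [::], n <= n', parallel_firing S J n n' ts,
      is_core_of K (parallel_union J ts) & s' = St K n' F]].
Proof.
move=> [J0 [n0 [F0 [[<- <- <-] [[d [h [? [? [? [? ?]]]]]]|[Hne H]]]]]].
  by left; exists d, h.
right; split; first by case=> d [h [? ? ? ?]]; apply: Hne; exists d, h.
case: H => ts [n' [K [Hts [Hn [Hdep [Hinj [_ [Hall [HK ->]]]]]]]]].
exists ts, n', K; split => //; split => //; try by move=> t /Hdep; intuition.
by move=> d h Hd Htg Ht Ha; case: (Hall d h Hd Htg Ht Ha) => t []; exists t.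
Qed.

Lemma nulls_below_parallel_union S J n n' ts : nulls_below J n -> n <= n' ->
  parallel_firing S J n n' ts -> nulls_below (parallel_union J ts) n'.
Proof.
move=> HJ Hn Hpf a /parallel_unionP [Ha|[t [ha [Ht Hha ->]]]] k.
  exact: nulls_below_le Hn HJ a Ha k.
case/mapP=> -[z|c] Hz //= Hk.
case Hzb : (z \in vars (body_of t.1.1)).
  move: Hk; rewrite (pf_body Hpf Ht Hzb) => Hk.
  case: (trig_val (pf_trig Hpf Ht) Hzb) => a0 Ha0 Hv.
  by apply: leq_trans (HJ a0 Ha0 k _) Hn; rewrite Hk.
have Hze : z \in exvars_of t.1.1.
  by rewrite /exvars_of /exvars mem_filter Hzb; apply/varsP; exists ha.
by case: (pf_fresh Hpf Ht Hze) => k' [Hk' /andP [_ Hk2]]; move: Hk; rewrite Hk' => -[->].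
Qed.

(* What extending an E-homomorphism into B over a firing of d by G requires of
   the head of d. *)
Definition head_ehom (E : nat) (B : instance) (G : nat -> val) (d : dep) :=
  forall a, List.In a (head_of d) ->
    (a.1 != E -> inst_atom G a \in B) /\ (a.1 = E -> exists u, (inst_atom G a).2 = [:: u; u]).

Section Extension.
Variables (S : seq dep) (J : instance) (n n' : nat) (ts : seq firing).
Hypothesis nulls_J : nulls_below J n.
Hypothesis Hpf : parallel_firing S J n n' ts.
Variables (g : val -> val) (G : firing -> nat -> val).
Hypothesis G_body : forall t, List.In t ts ->
  forall x, x \in vars (body_of t.1.1) -> G t x = g (t.1.2 x).

(* Sends the null introduced by t for z to G t z, and any other value x to g x. *)
Definition extend_fresh (x : val) : val :=
  match excluded_middle_informative
     (exists p : firing * nat, [/\ List.In p.1 ts, p.2 \in exvars_of p.1.1.1 & p.1.2 p.2 = x]) with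
  | left H => let p := proj1_sig (constructive_indefinite_description _ H) in G p.1 p.2
  | right _ => g x
  end.

Lemma extend_fresh_old x : (forall k, x = Null k -> k < n) -> extend_fresh x = g x.
Proof.
move=> Hx; rewrite /extend_fresh; case: excluded_middle_informative => // H.
exfalso; case: H => p [H1 H2 H3]; have [k [Hk /andP [Hnk _]]] := pf_fresh Hpf H1 H2.
by move: (Hx k); rewrite -H3 Hk => /(_ erefl); rewrite ltnNge Hnk.
Qed.

Lemma extend_fresh_new t z : List.In t ts -> z \in exvars_of t.1.1 ->
  extend_fresh (t.2 z) = G t z.
Proof.
move=> Ht Hz; rewrite /extend_fresh; case: excluded_middle_informative => [H|[]]; last first.
  by exists (t, z).
move: (proj2_sig (constructive_indefinite_description _ H)).
case: (proj1_sig _) => [t' z'] /= [H1 H2 H3].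
by have [-> ->] := pf_inj Hpf H1 Ht H2 Hz H3.
Qed.

Lemma extend_fresh_head t a : List.In t ts -> List.In a (head_of t.1.1) -> fixes_consts g ->
  (a.1, map extend_fresh (inst_atom t.2 a).2) = inst_atom (G t) a.
Proof.
move=> Ht Ha Hg; rewrite /inst_atom /= -map_comp; congr (_, _); apply/eq_in_map.
case=> [z|c] Hz /=; last by rewrite extend_fresh_old // Hg.
case Hzb : (z \in vars (body_of t.1.1)); last first.
  by rewrite extend_fresh_new // /exvars_of /exvars mem_filter Hzb; apply/varsP; exists a.
rewrite G_body // (pf_body Hpf Ht Hzb) extend_fresh_old // => k Hk.
by case: (trig_val (pf_trig Hpf Ht) Hzb) => a0 Ha0 Hv; apply: (nulls_J Ha0); rewrite -Hk.
Qed.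

Lemma ehom_extend_fresh E B : ehom E g J B ->
  (forall t, List.In t ts -> head_ehom E B (G t) t.1.1) ->
  ehom E extend_fresh (parallel_union J ts) B.
Proof.
move=> [Hc Hat HEat] Hheads.
have Hold a : a \in J -> map extend_fresh a.2 = map g a.2.
  move=> Ha; apply/eq_in_map => x Hx; apply: extend_fresh_old => k Ek.
  by apply: (nulls_J Ha); rewrite -Ek.
split=> [c|a|a]; first by rewrite extend_fresh_old // Hc.
- case/parallel_unionP=> [Ha|[t [ha [Ht Hha ->]]]] HaE; first by rewrite Hold // Hat.
  by rewrite (extend_fresh_head Ht Hha Hc); apply: (Hheads t Ht ha Hha).1.
- case/parallel_unionP=> [Ha HaE|[t [ha [Ht Hha ->]]] HaE].
    case: (HEat a Ha HaE) => u [w [Ea Huw]]; exists u, w; split => //.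
    by rewrite !extend_fresh_old // => k Ek; apply: (nulls_J Ha); rewrite Ea -Ek !inE eqxx ?orbT.
  have [u Hu] := (Hheads t Ht ha Hha).2 HaE.
  move: Hu; rewrite -(extend_fresh_head Ht Hha Hc).
  by case: (inst_atom t.2 ha).2 => [|x [|y []]] //= [Hx Hy]; exists x, y; rewrite Hx Hy.
Qed.

End Extension.

(** * The quotient of a model of [sigma_tgd] *)

Section Quotient.
Variables (sch : seq nat) (ar : nat -> nat) (E : nat) (S : seq dep) (J K0 : instance).
Variable g : val -> val.
Hypothesis wf_S : forall d, List.In d S -> dep_wf sch ar d.
Local Notation T := (sigma_tgd E ar S).
Hypothesis J_model : forall d h, List.In d T -> trig J d h -> ~ active J d h.
Hypothesis J_arity : forall a, a \in J -> size a.2 = ar a.1.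
Hypothesis g_ehom : ehom E g J K0.

Lemma model_tgd b hd h : List.In (Tgd b hd) T -> trig J (Tgd b hd) h ->
  exists h', (forall x, x \in vars b -> h' x = h x) /\
    forall a, List.In a hd -> inst_atom h' a \in J.
Proof. by move=> HT Ht; apply: NNPP => Hn; apply: (J_model HT Ht). Qed.

Definition egd_edge (a b : val) := exists b0 x y h,
  [/\ List.In (Egd b0 x y) S, trig J (Egd b0 x y) h, h x = a & h y = b].

Definition egd_equiv := clos_refl_sym_trans val egd_edge.

Lemma egd_edge_E a b : egd_edge a b -> (E, [:: a; b]) \in J /\ (E, [:: b; a]) \in J.
Proof.
move=> [b0 [x [y [h [Hd Ht <- <-]]]]].
have [h' [Hh' Hhd]] := model_tgd (sigma_tgd_egd ar E Hd) Ht.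
have [Hxb Hyb] := egd_vars wf_S Hd.
have := Hhd _ (or_introl erefl); have := Hhd _ (or_intror (or_introl erefl)).
by rewrite /inst_atom /= !Hh'.
Qed.

Lemma model_cong R vs i a b : R \in used_syms S -> (R, vs) \in J -> (E, [:: a; b]) \in J ->
  i < size vs -> nth (Cst 0) vs i = a -> (R, set_nth (Cst 0) vs i b) \in J.
Proof.
move=> HR Hin HE Hi Hn.
have Har : size vs = ar R by exact: (J_arity Hin).
pose h := cong_map a b vs.
have HT : List.In (Tgd [:: Eatom E 0 1; (R, cong_args (size vs) i 0)]
                       [:: (R, cong_args (size vs) i 1)]) T.
  by rewrite Har; apply: sigma_tgd_cong; rewrite // -Har.
have [|h' [Hh' Hhd]] := model_tgd (h := h) HT.
  by move=> a0 /= [<-|[<-|//]]; rewrite /inst_atom //= cong_body_inst.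
have := Hhd _ (or_introl erefl).
by rewrite (inst_head_exvars_nil (cong_exvars E R _ i) Hh' (or_introl erefl)) /inst_atom
  /= cong_head_inst.
Qed.

Definition transportable (a b : val) := forall R vs i, R \in used_syms S -> (R, vs) \in J ->
  i < size vs -> nth (Cst 0) vs i = a -> (R, set_nth (Cst 0) vs i b) \in J.

Lemma egd_equiv_transportable a b : egd_equiv a b -> transportable a b /\ transportable b a.
Proof.
elim=> [x y /egd_edge_E [H1 H2]|x|x y _ [H1 H2]|x y z _ [H1 H2] _ [H3 H4]].
- by split=> R vs i HR Hin; [exact: model_cong HR Hin H1|exact: model_cong HR Hin H2].
- by split => R vs i HR Hin Hi <-; rewrite set_nth_nth.
- by [].
- have Htr u w z' : transportable u w -> transportable w z' -> transportable u z'.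
    move=> P1 P2 R vs i HR Hin Hi Hn.
    have := P2 R _ i HR (P1 R vs i HR Hin Hi Hn).
    rewrite size_set_nth (maxn_idPr Hi) nth_set_nth /= eqxx => /(_ Hi erefl).
    by rewrite set_set_nth eqxx.
  by split; [exact: Htr H1 H3|exact: Htr H4 H2].
Qed.

Lemma transport R vs ws : R \in used_syms S -> (R, vs) \in J -> size ws = size vs ->
  (forall j, j < size vs -> egd_equiv (nth (Cst 0) vs j) (nth (Cst 0) ws j)) -> (R, ws) \in J.
Proof.
move=> HR Hin Hsz Heq.
pose mix j := mkseq (fun k => if k < j then nth (Cst 0) ws k else nth (Cst 0) vs k) (size vs).
have -> : ws = mix (size vs).
  rewrite /mix -[LHS](mkseq_nth (Cst 0) ws) Hsz; apply/eq_in_map => k.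
  by rewrite mem_iota add0n => /andP [_ ->].
elim: {-2}(size vs) (leqnn (size vs)) => [_|j IH Hj].
  by rewrite /mix -[X in (R, X)](mkseq_nth (Cst 0) vs) in Hin *.
have Hmix : mix j.+1 = set_nth (Cst 0) (mix j) j (nth (Cst 0) ws j).
  apply: (@eq_from_nth _ (Cst 0)); first by rewrite size_set_nth !size_mkseq (maxn_idPr _).
  move=> k; rewrite size_mkseq => Hk; rewrite nth_set_nth /= !nth_mkseq //.
  by case: eqP => [->|/eqP Hkj]; rewrite ?ltnSn // ltnS leq_eqVlt (negbTE Hkj).
rewrite Hmix; apply: (egd_equiv_transportable (Heq j Hj)).1 HR (IH (ltnW Hj)) _ _.
- by rewrite size_mkseq.
- by rewrite nth_mkseq // ltnn.
Qed.

Lemma egd_equiv_g a b : egd_equiv a b -> g a = g b.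
Proof.
elim=> // [x y /egd_edge_E [H1 _]|x y z _ -> _ ->] //.
by case: (ehom_Eatom g_ehom H1 erefl) => u [w [[-> ->] ->]].
Qed.

Definition represents (v r : val) :=
  egd_equiv r v /\ ((exists c, egd_equiv (Cst c) v) -> exists c, r = Cst c).

(* Constants are preferred, so that [rep] fixes them. *)
Definition rep (v : val) : val := epsilon (inhabits (Cst 0)) (represents v).

Lemma rep_spec v : represents v (rep v).
Proof.
apply: epsilon_spec; case: (classic (exists c, egd_equiv (Cst c) v)) => [[c Hc]|Hn].
- by exists (Cst c); split => // _; exists c.
- by exists v; split; [exact: rst_refl|move=> H; case: (Hn H)].
Qed.

Lemma rep_equiv v : egd_equiv (rep v) v.
Proof. exact: (rep_spec v).1. Qed.

Lemma rep_eq v w : egd_equiv v w -> rep v = rep w.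
Proof.
move=> Hvw; rewrite /rep; congr (epsilon _ _); apply: functional_extensionality => r.
apply: propositional_extensionality; rewrite /represents; split.
- case=> H1 H2; split; first exact: rst_trans H1 Hvw.
  by case=> c Hc; apply: H2; exists c; exact: rst_trans Hc (rst_sym _ _ _ _ Hvw).
- case=> H1 H2; split; first exact: rst_trans H1 (rst_sym _ _ _ _ Hvw).
  by case=> c Hc; apply: H2; exists c; exact: rst_trans Hc Hvw.
Qed.

Lemma rep_consts : fixes_consts rep.
Proof.
move=> c; case: (rep_spec (Cst c)) => H1 []; first by exists c; exact: rst_refl.
move=> c' Hc'; move: H1; rewrite Hc' => /egd_equiv_g.
by rewrite !(ehom_consts g_ehom) => -[->].
Qed.

Lemma g_rep v : g (rep v) = g v.
Proof. exact/egd_equiv_g/rep_equiv. Qed.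

Definition quotient := rename rep J.

Lemma quotient_vals a x : a \in quotient -> x \in a.2 -> rep x = x.
Proof. by move=> /renameP [b0 _ ->] /mapP [y _ ->]; exact/rep_eq/rep_equiv. Qed.

Lemma trig_quotient d h : List.In d S -> trig quotient d h -> trig J d h.
Proof.
move=> Hd Ht a Ha; have /renameP [b0 Hb0 Eb] := Ht a Ha.
rewrite [inst_atom h a]surjective_pairing.
have E1 : (inst_atom h a).1 = b0.1 by rewrite Eb.
rewrite E1; apply: (transport (vs := b0.2)).
- by rewrite -E1; exact: (used_syms_body Hd Ha).
- by rewrite -surjective_pairing.
- by rewrite Eb /= size_map.
- by move=> j Hj; rewrite Eb /= (nth_map (Cst 0)) //; exact/rst_sym/rep_equiv.
Qed.

Lemma quotient_tgd b hd h : List.In (Tgd b hd) S -> trig quotient (Tgd b hd) h ->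
  exists H, (forall x, x \in vars b -> H x = h x) /\
    forall a, List.In a hd -> inst_atom H a \in quotient.
Proof.
move=> Hd Ht; have [h' [Hh' Hhd]] := model_tgd (sigma_tgd_tgd ar E Hd) (trig_quotient Hd Ht).
exists (fun z => rep (h' z)); split.
- by move=> x Hx; rewrite Hh' //; case: (trig_val Ht Hx) => a Ha Hv; exact: quotient_vals Ha Hv.
- by move=> a Ha; rewrite inst_atom_comp; [exact: mem_rename (Hhd a Ha)|exact: rep_consts].
Qed.

Lemma quotient_egd b x y h : List.In (Egd b x y) S -> trig quotient (Egd b x y) h -> h x = h y.
Proof.
move=> Hd Ht; have [Hxb Hyb] := egd_vars wf_S Hd.
have He : egd_equiv (h x) (h y).
  by apply: rst_step; exists b, x, y, h; split => //; exact: trig_quotient.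
case: (trig_val Ht Hxb) => a Ha Hv; case: (trig_val Ht Hyb) => a' Ha' Hv'.
by rewrite -(quotient_vals Ha Hv) -(quotient_vals Ha' Hv'); exact: rep_eq.
Qed.

End Quotient.

Definition asbool (P : Prop) : bool := if excluded_middle_informative P then true else false.

Lemma asboolP (P : Prop) : reflect P (asbool P).
Proof. by rewrite /asbool; case: excluded_middle_informative => H; constructor. Qed.

Lemma core_terminal_exists S I : terminates Core S I ->
  exists2 s, star (core_step S) (init I) s & forall s', ~ core_step S s s'.
Proof.
move=> Ht; apply: NNPP => Hn; apply: Ht.
apply: (infinite_run (P := star (core_step S) (init I))); first exact: star_refl.
move=> s Hs; apply: NNPP => Hn2; apply: Hn; exists s => // s' Hs'.
by apply: Hn2; exists s'; [exact: star_step Hs Hs'|exists s'; last exact: star_refl].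
Qed.

Section ParallelFiring.
Variables (S : seq dep) (J : instance) (n : nat).
Hypothesis S_tgds : forall d, List.In d S -> is_tgd d.

Definition active_trigger_of (k : key) h :=
  [/\ List.In k.1 S, trig J k.1 h, active J k.1 h & obl_key k.1 h = k].

Definition active_keys :=
  undup [seq k <- candidate_keys S J | asbool (exists h, active_trigger_of k h)].

Lemma mem_active_keys d h : List.In d S -> trig J d h -> active J d h ->
  obl_key d h \in active_keys.
Proof.
move=> Hd Ht Ha; rewrite mem_undup mem_filter candidate_keys_trig // andbT.
by apply/asboolP; exists h.
Qed.

(* The i-th active trigger sends its j-th existential variable to the null
   n + i * B + j, where B bounds the number of existential variables. *)
Lemma parallel_firing_exists : exists ts n', [/\ n <= n', parallel_firing S J n n' ts,
  List.NoDup [seq obl_key t.1.1 t.1.2 | t <- ts] & ts = [::] -> active_keys = [::]].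
Proof.
have [hk Hhk] : exists hk : key -> nat -> val,
    forall k, List.In k active_keys -> active_trigger_of k (hk k).
  apply: (list_choice (fun _ => Cst 0)) => k /InP.
  by rewrite mem_undup mem_filter => /andP [/asboolP [h ?] _]; exists h.
pose B := (\max_(d <- S) size (exvars_of d)).+1.
pose N := size active_keys.
pose k0 : key := (Tgd [::] [::], [::]).
have Hkey i : i < N -> List.In (nth k0 active_keys i) active_keys.
  by move=> Hi; apply/InP; apply: mem_nth.
have HB i z : i < N -> z \in exvars_of (nth k0 active_keys i).1 ->
    index z (exvars_of (nth k0 active_keys i).1) < B.
  move=> /Hkey /Hhk [/InP Hd _ _ _] Hz; rewrite ltnS (leq_trans (index_size _ _)) //.
  exact: (@leq_bigmax_seq _ _ _ (fun d => size (exvars_of d))).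
pose fire_at i (k : key) : firing := (k.1, hk k,
  fun z => if z \in exvars_of k.1 then Null (n + (i * B + index z (exvars_of k.1)))%N else hk k z).
pose ts := mkseq (fun i => fire_at i (nth k0 active_keys i)) N.
exists ts, (n + N * B)%N; split; first exact: leq_addr.
- split.
  + by move=> t /In_mkseq [i /Hkey /Hhk [Hd _ _ _] ->]; split => //; exact: S_tgds.
  + by move=> t /In_mkseq [i /Hkey /Hhk [_ ? _ _] ->].
  + by move=> t /In_mkseq [i /Hkey /Hhk [_ _ ? _] ->].
  + move=> t /In_mkseq [i _ ->] x /= Hx.
    by rewrite ifN // /exvars_of /exvars mem_filter Hx.
  + move=> t /In_mkseq [i Hi ->] z /= Hz; rewrite Hz; eexists; split; first reflexivity.
    by rewrite leq_addr ltn_add2l mixed_radix_lt // HB.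
  + move=> t1 t2 z1 z2 /In_mkseq [i1 Hi1 ->] /In_mkseq [i2 Hi2 ->] /= Hz1 Hz2.
    rewrite Hz1 Hz2 => -[] /addnI /(mixed_radix_inj (HB _ _ Hi1 Hz1) (HB _ _ Hi2 Hz2)).
    case=> Ei Ej; subst i2; split => //.
    by rewrite -(nth_index 0 Hz1) -(nth_index 0 Hz2) Ej.
  + move=> d h Hd _ Ht Ha; have Hk := mem_active_keys Hd Ht Ha.
    exists (fire_at (index (obl_key d h) active_keys) (obl_key d h)).
      by apply/In_mkseq; exists (index (obl_key d h) active_keys); rewrite ?index_mem ?nth_index.
    by move/InP: Hk => /Hhk [_ _ _ ->].
- have -> : [seq obl_key t.1.1 t.1.2 | t <- ts] = active_keys.
    rewrite -map_comp -[RHS](mkseq_nth k0) /mkseq; apply/eq_in_map => i.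
    by rewrite mem_iota => /andP [_ Hi] /=; case: (Hhk _ (Hkey i Hi)) => _ _ _ ->.
  exact/uniq_NoDup/undup_uniq.
- by rewrite /ts /mkseq /N; case: (active_keys).
Qed.

End ParallelFiring.

Lemma core_step_of_active S J n F : (forall d, List.In d S -> is_tgd d) ->
  (exists d h, [/\ List.In d S, trig J d h & active J d h]) ->
  exists s', core_step S (St J n F) s'.
Proof.
move=> S_tgds [d0 [h0 [Hd0 Ht0 Ha0]]].
have [ts [n' [Hn [Hdep Htrig Hact Hbody Hfresh Hinj Hall] Hnodup Hnil]]] :=
  parallel_firing_exists J n S_tgds.
have [K HK] := core_exists (parallel_union J ts).
exists (St K n' F), J, n, F; split => //; right; split.
  by case=> d [h [Hd [He _]]]; move: (S_tgds d Hd) He; case: d {Hd}.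
exists ts, n', K; split.
  by move/Hnil => Hts; move: (mem_active_keys Hd0 Ht0 Ha0); rewrite Hts.
do 2 split => //.
  move=> t Ht; have [? ?] := Hdep t Ht.
  do 2 split => //; split; first exact: Htrig.
  by split; [exact: Hact|split; [exact: Hbody|exact: Hfresh]].
do 3 split => //.
by move=> d h Hd Htg Ht Ha; have [t ? ?] := Hall d h Hd Htg Ht Ha; exists t.
Qed.

(** * The core chase *)

Lemma core_step_cases sch ar S J n F J2 n2 F2 :
  (forall d, List.In d S -> dep_wf sch ar d) -> core_step S (St J n F) (St J2 n2 F2) ->
  (exists u w, [/\ u <> w, exists k, u = Null k, u \in vals J /\ w \in vals J,
     exists b x y h, [/\ List.In (Egd b x y) S, trig J (Egd b x y) h &
       (u = h x /\ w = h y) \/ (u = h y /\ w = h x)] &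
     [/\ J2 = rename (replace u w) J, n2 = n & F2 = F]]) \/
  [/\ ~ egd_active S J & exists ts, [/\ ts <> [::], n <= n2, parallel_firing S J n n2 ts,
     is_core_of J2 (parallel_union J ts) & F2 = F]].
Proof.
move=> wf_S /core_stepP [[d [h [Hd He Ht Ha]]]|[Hne [ts [n' [K [Hts Hn Hpf HK [-> -> ->]]]]]]].
  case: d Hd He Ht Ha => // b x y Hd _ Ht Ha /esym Hr; left.
  have [u [w [Huw Hku -> -> ->]]] := egd_result_merge Ha Hr.
  have [Hxb Hyb] := egd_vars wf_S Hd.
  have [ax Hax Hx] := trig_val Ht Hxb; have [ay Hay Hy] := trig_val Ht Hyb.
  exists u, w; split => //; last by exists b, x, y, h.
  - by case: Huw => -[-> ->] // /esym.
  - by case: Huw => -[-> ->]; split; apply/valsP; by [exists ax|exists ay].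
by right; split => //; exists ts.
Qed.

Lemma core_step_active S0 J n F s' : core_step S0 (St J n F) s' ->
  exists d h, [/\ List.In d S0, trig J d h & active J d h].
Proof.
case/core_stepP=> [[d [h [? _ ? ? _]]]|[_ [ts [n' [K [Hne _ Hpf _ _]]]]]]; first by exists d, h.
case: ts Hne Hpf => [//|t ts] _ Hpf; have Ht : List.In t (t :: ts) by left.
exists t.1.1, t.1.2; split; first exact: (pf_dep Hpf Ht).1.
- exact: (pf_trig Hpf Ht).
- exact: (pf_active Hpf Ht).
Qed.


Lemma core_step_tgds S0 J n F s' : (forall d, List.In d S0 -> is_tgd d) ->
  core_step S0 (St J n F) s' -> exists ts n' K, [/\ n <= n', parallel_firing S0 J n n' ts,
    is_core_of K (parallel_union J ts) & s' = St K n' F].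
Proof.
move=> S0_tgds /core_stepP [[d [h [Hd He _ _ _]]]|[_ [ts [n' [K [_ ? ? ? ?]]]]]].
  by move: (S0_tgds d Hd) He; case: d {Hd}.
by exists ts, n', K.
Qed.

Definition state_inst (s : state) : instance := if s is St J _ _ then J else fset0.
Definition state_count (s : state) : nat := if s is St _ n _ then n else 0.
Definition state_keys (s : state) : seq key := if s is St _ _ F then F else [::].

Section CoreChase.
Variables (sch : seq nat) (ar : nat -> nat) (E : nat) (S : seq dep) (I : instance).
Hypothesis wf_S : forall d, List.In d S -> dep_wf sch ar d.
Hypothesis E_fresh : E \notin sch.
Hypothesis E_arity : ar E = 2.
Hypothesis wf_I : inst_wf sch ar I.
Local Notation T := (sigma_tgd E ar S).

Lemma wf_core_step J n F J2 n2 F2 :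
  nulls_below J n -> inst_wf sch ar J -> core_step S (St J n F) (St J2 n2 F2) ->
  nulls_below J2 n2 /\ inst_wf sch ar J2.
Proof.
move=> HN HW /(core_step_cases wf_S).
case=> [[u [w [_ _ [_ /valsP [aw Haw Hw]] _ [-> -> _]]]]|[_ [ts [_ Hn Hpf [Hsub _] _]]]].
  split=> a2 /renameP [a Ha ->]; last by rewrite /= size_map; exact: HW.
  move=> k /mapP [z Hz]; rewrite /replace; case: eqP => _ Hk.
  - by apply: (HN _ Haw); rewrite Hk.
  - by apply: (HN _ Ha); rewrite Hk.
split=> a /(fsubsetP Hsub) Ha; first exact: nulls_below_parallel_union HN Hn Hpf _ Ha.
case/parallel_unionP: Ha => [/HW //|[t [ha [Ht Hha ->]]]].
have [HdS _] := pf_dep Hpf Ht; have [Hsch Har] := head_wf wf_S HdS Hha.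
by split; last rewrite /= size_map.
Qed.

Lemma core_step_hom J n F J2 n2 F2 : core_step S (St J n F) (St J2 n2 F2) ->
  exists p, hom p J J2.
Proof.
case/(core_step_cases wf_S) => [[u [w [_ [k Hk] _ _ [-> _ _]]]]|[_ [ts [_ _ _ [_ [[g Hg] _]] _]]]].
  by exists (replace u w); split => [c|a]; [rewrite /replace Hk|exact: mem_rename].
by exists g; exact: hom_sub Hg (parallel_union_sub _ _).
Qed.

Definition tgds_satisfied_by (r : val -> val) (J K : instance) :=
  forall b hd h, List.In (Tgd b hd) S -> trig J (Tgd b hd) h ->
    exists2 H, (forall x, x \in vars b -> H x = r (h x)) &
      forall a, List.In a hd -> inst_atom H a \in K.

(* The effect of a parallel tgd step from J to K. *)
Definition tgd_step (J K : instance) := [/\ ~ egd_active S J,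
  exists2 r, hom r J K & tgds_satisfied_by r J K
  & forall C, C `<` K -> ~ exists g, hom g K C].

Lemma parallel_firing_tgd_step J n n' ts K : ~ egd_active S J ->
  parallel_firing S J n n' ts -> is_core_of K (parallel_union J ts) -> tgd_step J K.
Proof.
move=> Hne Hpf [_ [[r [Hrc Hr]] Hmin]]; split => //.
exists r; first exact: hom_sub (conj Hrc Hr) (parallel_union_sub _ _).
move=> b hd h Hd Ht; case: (classic (active J (Tgd b hd) h)) => [Ha|/NNPP [h' [Hh' Hhd]]].
  have [t Ht1 [Ed Hm]] := pf_all Hpf Hd erefl Ht Ha.
  rewrite Ed in Hm; move/eq_in_map: Hm => Hm.
  exists (fun z => r (t.2 z)) => [x Hx|a Ha'].
    by rewrite (pf_body Hpf Ht1) ?Ed // Hm // Ed.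
  rewrite inst_atom_comp //; apply: (Hr (inst_atom t.2 a)).
  by apply: mem_parallel_union_head; rewrite ?Ed.
exists (fun z => r (h' z)) => [x Hx|a Ha']; first by rewrite Hh'.
rewrite inst_atom_comp //; apply: (Hr (inst_atom h' a)).
exact/(fsubsetP (parallel_union_sub _ _))/Hhd.
Qed.

Variable f : nat -> state.
Hypothesis f0 : f 0 = init I.
Hypothesis f_step : forall k, core_step S (f k) (f k.+1).

Local Notation stage k := (state_inst (f k)).

Lemma stage_step k : core_step S (St (stage k) (state_count (f k)) (state_keys (f k)))
  (St (stage k.+1) (state_count (f k.+1)) (state_keys (f k.+1))).
Proof.
have St_f j : f j = St (stage j) (state_count (f j)) (state_keys (f j)).
  by have [J [n [F [-> _]]]] := f_step j.
by have := f_step k; rewrite {1}St_f (St_f k.+1).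
Qed.

Lemma stage_wf k : nulls_below (stage k) (state_count (f k)) /\ inst_wf sch ar (stage k).
Proof.
elim: k => [|k [HN HW]]; last exact: wf_core_step HN HW (stage_step k).
by rewrite f0; split => //; exact: nulls_below_null_bound.
Qed.

Lemma stage_nonE k a : a \in stage k -> a.1 != E.
Proof. by case/(proj2 (stage_wf k)) => /(sch_neq_E E_fresh). Qed.


Lemma stage_hom k k' : k <= k' -> exists p, hom p (stage k) (stage k').
Proof.
move=> Hk; rewrite -(subnKC Hk); elim: (k' - k) => [|m [p Hp]].
  by rewrite addn0; exists id; exact: hom_id.
have [p2 Hp2] := core_step_hom (stage_step (k + m)).
by exists (fun x => p2 (p x)); rewrite addnS; exact: hom_comp Hp Hp2.
Qed.

(* Egd steps decrease the number of values, so a parallel tgd step must come. *)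
Lemma tgd_step_after k : exists2 s, k <= s & tgd_step (stage s) (stage s.+1).
Proof.
elim: {k}(size (undup (vals (stage k)))).+1 {-2}k (ltnSn (size (undup (vals (stage k))))) =>
  // m IH k Hm.
case/(core_step_cases wf_S): (stage_step k) => [[u [w [Huw _ [Hu Hw] _ [EJ _ _]]]]|].
  have [|s Hs] := IH k.+1; last by exists s => //; exact: ltnW.
  by rewrite -ltnS EJ; apply: leq_trans (size_undup_vals_merge Huw Hu Hw) Hm.
by case=> Hne [ts [_ _ Hpf HK _]]; exists k => //; exact: parallel_firing_tgd_step Hne Hpf HK.
Qed.

Lemma tgd_step_continue J J' r gs K d h : ~ egd_active S J -> hom r J J' ->
  tgds_satisfied_by r J J' -> ehom E gs K J -> List.In d T -> trig K d h ->
  exists G, (forall x, x \in vars (body_of d) -> G x = r (gs (h x))) /\ head_ehom E J' G d.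
Proof.
move=> Hne [_ Hr] Hsat Hgs HT Ht.
case/sigma_tgdP: HT => [[b [hd [Ed HdS]]]|[[b [x [y [Ed HdS]]]]|[R [i [Ed [HR _]]]]]];
  subst d.
- have [|H H1 H2] := Hsat b hd (fun z => gs (h z)) HdS.
    by apply: (trig_ehom Hgs _ Ht) => a; apply: (body_neq_E wf_S E_fresh HdS).
  exists H; split => // a Ha; split => [_|HaE]; first exact: H2.
  by move: (head_neq_E wf_S E_fresh HdS Ha); rewrite HaE eqxx.
- have Hxy : gs (h x) = gs (h y).
    apply: NNPP => Hxy; apply: Hne; exists (Egd b x y), (fun z => gs (h z)); split => //.
    by apply: (trig_ehom Hgs _ Ht) => a; apply: (body_neq_E wf_S E_fresh HdS).
  exists (fun z => r (gs (h z))); split => // a [<-|[<-|//]] /=.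
  + by split => [/eqP //|_]; exists (r (gs (h x))); rewrite Hxy.
  + by split => [/eqP //|_]; exists (r (gs (h y))); rewrite Hxy.
- have [u [w [Euw Huw]]] := ehom_Eatom Hgs (Ht _ (or_introl erefl)) erefl.
  move: Euw => [Eu Ew]; rewrite -Eu -Ew in Huw.
  have HRE := used_syms_neq_E wf_S E_fresh HR.
  have Hbody := ehom_atom Hgs (Ht _ (or_intror (or_introl erefl))) HRE.
  exists (fun z => r (gs (h z))); split => // a [<-|//]; split => /= [_|HE]; last first.
    by move: HRE; rewrite HE eqxx.
  rewrite /inst_atom /=.
  have -> : map (sub (fun z => r (gs (h z)))) (cong_args (ar R) i 1) =
            map r (map gs (map (sub h) (cong_args (ar R) i 0))).
    rewrite !map_sub_cong_args /mkseq -!map_comp; apply/eq_in_map => j /=.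
    by case: eqP => // _; rewrite Huw.
  exact: (Hr _ Hbody).
Qed.

Lemma ehom_core_step_tgds K nK FK K2 nK2 FK2 k g :
  core_step T (St K nK FK) (St K2 nK2 FK2) -> nulls_below K nK -> ehom E g K (stage k) ->
  exists k' g', ehom E g' K2 (stage k').
Proof.
case/(core_step_tgds (@sigma_tgd_is_tgd _ _ _)) => ts [n' [K' [_ Hpf [Hsub _] [-> _ _]]]] HN Hg.
have [s Hks [Hne [r Hr Hsat] _]] := tgd_step_after k.
have [pi Hpi] := stage_hom Hks.
have Hgs := ehom_hom Hg Hpi.
pose cont (t : firing) (G : nat -> val) :=
  (forall x, x \in vars (body_of t.1.1) -> G x = r (pi (g (t.1.2 x)))) /\
  head_ehom E (stage s.+1) G t.1.1.
have [G HG] : exists G : firing -> nat -> val, forall t, List.In t ts -> cont t (G t).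
  apply: (list_choice (fun _ => Cst 0)) => t Ht.
  by apply: tgd_step_continue Hne Hr Hsat Hgs _ (pf_trig Hpf Ht); case: (pf_dep Hpf Ht).
exists s.+1, (extend_fresh ts (fun x => r (pi (g x))) G).
apply: ehom_sub Hsub; apply: (ehom_extend_fresh HN Hpf _ (ehom_hom Hgs Hr)).
- by move=> t /HG [].
- by move=> t /HG [].
Qed.

Lemma sigma_tgd_run s : star (core_step T) (init I) s ->
  exists K nK FK, [/\ s = St K nK FK, nulls_below K nK, forall a, a \in K -> size a.2 = ar a.1,
    exists p, hom p I K & exists k g, ehom E g K (stage k)].
Proof.
elim=> [|s1 s2 _ [K [nK [FK [-> HN Har [p Hp] [k [g Hg]]]]]] Hst].
  exists I, (null_bound I), [::]; split => //; first exact: nulls_below_null_bound.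
  - by move=> a /wf_I [].
  - by exists id; exact: hom_id.
  exists 0, id; rewrite f0 /=; apply: ehom_of_hom; last exact: hom_id.
  by move=> a /wf_I [/(sch_neq_E E_fresh)].
have [ts [n' [K' [Hn Hpf [Hsub [[r Hr] _]] Es2]]]] := core_step_tgds (@sigma_tgd_is_tgd _ _ _) Hst.
subst s2; exists K', n', FK; split => //.
- by move=> a /(fsubsetP Hsub); apply: (nulls_below_parallel_union HN Hn Hpf).
- move=> a /(fsubsetP Hsub) /parallel_unionP [/Har //|[t [ha [Ht Hha ->]]]].
  by apply: (sigma_tgd_head_arity wf_S _ E_arity _ Hha); case: (pf_dep Hpf Ht).
- by exists (fun x => r (p x)); apply: hom_comp Hp (hom_sub Hr (parallel_union_sub _ _)).
- exact: ehom_core_step_tgds Hst HN Hg.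
Qed.

Section ModelOfSigmaTgd.
Variables (J K0 : instance) (g pi : val -> val).
Hypothesis J_model : forall d h, List.In d T -> trig J d h -> ~ active J d h.
Hypothesis J_arity : forall a, a \in J -> size a.2 = ar a.1.
Hypothesis g_ehom : ehom E g J K0.
Hypothesis pi_hom : hom pi I J.
Local Notation Q := (quotient S J).

(* The quotient is a model of S receiving I, hence every stage. *)
Lemma stage_to_quotient k : exists p, hom p (stage k) Q.
Proof.
elim: k => [|k [p Hp]].
  rewrite f0; exists (fun x => rep S J (pi x)); apply: hom_comp pi_hom _.
  by split => [|a Ha]; [exact: (rep_consts wf_S J_model g_ehom)|exact: mem_rename].
case/(core_step_cases wf_S): (stage_step k).
  case=> [u [w [_ _ _ [b [x [y [h [Hd Ht Huw]]]]] [-> _ _]]]].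
  have Hxy := quotient_egd wf_S J_model J_arity Hd (trig_hom Hp Ht).
  exists p; split => [|_ /renameP [a Ha ->]]; first by case: Hp.
  rewrite /= -map_comp (@eq_map _ _ _ p); first exact: Hp.2 a Ha.
  by move=> z /=; rewrite /replace; case: eqP => // ->; case: Huw => -[-> ->].
case=> _ [ts [_ _ Hpf [Hsub _] _]].
pose cont (t : firing) (G : nat -> val) :=
  (forall x, x \in vars (body_of t.1.1) -> G x = p (t.1.2 x)) /\ head_ehom E Q G t.1.1.
have [G HG] : exists G : firing -> nat -> val, forall t, List.In t ts -> cont t (G t).
  apply: (list_choice (fun _ => Cst 0)) => -[[d h] h'] Ht; have Htr := trig_hom Hp (pf_trig Hpf Ht).
  case: (pf_dep Hpf Ht); rewrite /cont /=; case: d Ht Htr => // b hd _ Htr HdS _.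
  have [H [H1 H2]] := quotient_tgd wf_S J_model J_arity g_ehom HdS Htr.
  exists H; split => // a Ha; split => [_|HaE]; first exact: H2.
  by move: (head_neq_E wf_S E_fresh HdS Ha); rewrite HaE eqxx.
exists (extend_fresh ts p G); apply: (hom_of_ehom (@stage_nonE k.+1)).
apply: ehom_sub Hsub; apply: (ehom_extend_fresh (proj1 (stage_wf k)) Hpf).
- by move=> t /HG [].
- exact: ehom_of_hom (@stage_nonE k) Hp.
- by move=> t /HG [].
Qed.

Lemma core_retract_of_quotient Kc p gg :
  (forall C, C `<` Kc -> ~ exists g, hom g Kc C) -> (forall a, a \in Kc -> a.1 != E) ->
  hom p Kc Q -> ehom E gg J Kc ->
  exists r, [/\ fixes_consts r, forall a, a \in Q -> a.1 != E -> (a.1, map r a.2) \in Kc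
    & forall x, x \in vals Kc -> r (p x) = x].
Proof.
move=> Hmin HnE [Hpc Hp] Hgg; have Hggc := ehom_consts Hgg.
have HQ a : a \in Q -> a.1 != E -> (a.1, map gg a.2) \in Kc.
  move=> /renameP [b0 Hb0 ->] /= HbE; rewrite -map_comp (@eq_map _ _ _ gg).
    exact: (ehom_atom Hgg).
  by move=> v /=; rewrite (g_rep wf_S J_model Hgg).
have Hphi a : a \in Kc -> (a.1, map (fun v => gg (p v)) a.2) \in Kc.
  by move=> Ha; rewrite map_comp; apply: (HQ (a.1, map p a.2)); [exact: Hp Ha|exact: HnE Ha].
have Hren : rename (fun v => gg (p v)) Kc = Kc.
  have Hsub : rename (fun v => gg (p v)) Kc `<=` Kc.
    by apply/fsubsetP => _ /renameP [a Ha ->]; exact: Hphi.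
  case: (eqVfproper Hsub) => // /Hmin []; exists (fun v => gg (p v)); split.
    by move=> c; rewrite Hpc Hggc.
  by move=> a Ha; exact: mem_rename.
have [|psi [[Hpsic Hpsi] Hpsiphi]] := onto_endo_inverse _ Hren; first by move=> c; rewrite Hpc Hggc.
exists (fun v => psi (gg v)); split => // [c|a Ha HaE]; first by rewrite Hggc Hpsic.
by rewrite map_comp; apply: (Hpsi (a.1, map gg a.2)); exact: HQ.
Qed.

Lemma retract_of_quotient_model Kc p r : hom p Kc Q -> fixes_consts r ->
  (forall a, a \in Q -> a.1 != E -> (a.1, map r a.2) \in Kc) ->
  (forall x, x \in vals Kc -> r (p x) = x) ->
  forall d h, List.In d S -> trig Kc d h -> ~ active Kc d h.
Proof.
move=> Hp Hrc Hr Hrp [b hd|b x y] h Hd Ht; have Htq := trig_hom Hp Ht.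
  have [H [H1 H2]] := quotient_tgd wf_S J_model J_arity g_ehom Hd Htq.
  apply; exists (fun z => r (H z)); split => [x Hx|a Ha].
    by rewrite H1 // Hrp //; case: (trig_val Ht Hx) => a Ha Hv; apply/valsP; exists a.
  rewrite inst_atom_comp //; apply: Hr (H2 a Ha) _.
  exact: (head_neq_E wf_S E_fresh Hd Ha).
have [Hxb Hyb] := egd_vars wf_S Hd.
have [ax Hax Hx] := trig_val Ht Hxb; have [ay Hay Hy] := trig_val Ht Hyb.
apply; rewrite -(Hrp (h x)); last by apply/valsP; exists ax.
rewrite -(Hrp (h y)); last by apply/valsP; exists ay.
by rewrite (quotient_egd wf_S J_model J_arity Hd Htq).
Qed.

End ModelOfSigmaTgd.

Lemma sigma_tgd_core_chase_infinite : ~ terminates Core T I.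
Proof.
move=> Hterm; have [s Hs Hend] := core_terminal_exists Hterm.
have [J [nJ [FJ [Es _ J_arity [pi Hpi] [k0 [g Hg]]]]]] := sigma_tgd_run Hs.
have J_model d h : List.In d T -> trig J d h -> ~ active J d h.
  move=> Hd Ht Ha; have [|s' Hs'] := @core_step_of_active T J nJ FJ (@sigma_tgd_is_tgd _ _ _).
    by exists d, h.
  by apply: (Hend s'); rewrite Es.
have [s1 Hks [_ _ Hmin]] := tgd_step_after k0.
have [pi2 Hpi2] := stage_hom (leq_trans Hks (leqnSn _)).
have [p Hp] := stage_to_quotient J_model J_arity Hg Hpi s1.+1.
have [r [Hrc Hr Hrp]] :=
  core_retract_of_quotient J_model Hmin (@stage_nonE s1.+1) Hp (ehom_hom Hg Hpi2).
have [d [h [Hd Ht Ha]]] := core_step_active (stage_step s1.+1).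
exact: (retract_of_quotient_model J_model J_arity Hg Hp Hrc Hr Hrp Hd Ht Ha).
Qed.

End CoreChase.

Theorem theorem2 (sch : seq nat) (ar : nat -> nat) (E : nat)
  (Sigma : seq dep) (I : instance) (v : variant) :
  (forall d, List.In d Sigma -> dep_wf sch ar d) ->
  inst_wf sch ar I ->
  E \notin sch -> ar E = 2 ->
  terminates v (sigma_tgd E ar Sigma) I -> terminates v Sigma I.
Proof.
move=> wf_S wf_I E_fresh E_arity.
case: v => Ht; try by apply: (terminates_of_sigma_tgd wf_S E_fresh E_arity _ wf_I Ht).
case=> f [f0 f_step].
exact: (sigma_tgd_core_chase_infinite wf_S E_fresh E_arity wf_I f0 f_step Ht).
Qed.
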